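(* Let $u\in C^2(\Omega)$ on a domain $\Omega\subset\mathbb{R}^2$, let $S(u)=\{(x,y)\in\Omega:u_x-y=0,\ u_y+x=0\}$, and on $\Omega\setminus S(u)$ let $N(u)=(u_x-y,u_y+x)/\sqrt{(u_x-y)^2+(u_y+x)^2}$. Let $\Gamma_s\subset S(u)$ be a $C^1$ smooth curve, $p_0\in\Gamma_s$, and suppose there is a ball $B_\epsilon(p_0)\subset\Omega$ such that $B_\epsilon(p_0)\setminus(\Gamma_s\cap B_\epsilon(p_0))=B^+\cup B^-$ where $B^+,B^-$ are disjoint domains (connected open sets) containing no points of $S(u)$. Then both limits $N(u)(p_0^+)=\lim_{p\in B^+,\,p\to p_0}N(u)(p)$ and $N(u)(p_0^-)=\lim_{p\in B^-,\,p\to p_0}N(u)(p)$ exist, and $N(u)(p_0^+)=-N(u)(p_0^-)$. *)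

From Stdlib Require Import Reals.
From Coquelicot Require Import Coquelicot.
Open Scope R_scope.

Definition disk (p0 : R * R) (eps : R) (p : R * R) : Prop :=
  (fst p - fst p0) ^ 2 + (snd p - snd p0) ^ 2 < eps ^ 2.

Definition open2 (A : R * R -> Prop) : Prop :=
  forall p, A p -> exists e, 0 < e /\ (forall q, disk p e q -> A q).

Definition connected2 (A : R * R -> Prop) : Prop :=
  forall U V : R * R -> Prop, open2 U -> open2 V ->
    (forall p, A p -> U p \/ V p) ->
    (exists p, A p /\ U p) -> (exists p, A p /\ V p) ->
    exists p, A p /\ U p /\ V p.

Definition domain2 (A : R * R -> Prop) : Prop :=
  open2 A /\ connected2 A /\ exists p, A p.

Definition dx (f : R -> R -> R) (x y : R) : R := Derive (fun t => f t y) x.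
Definition dy (f : R -> R -> R) (x y : R) : R := Derive (fun t => f x t) y.

Definition cont2 (f : R -> R -> R) (p : R * R) : Prop :=
  continuous (fun q : R * R => f (fst q) (snd q)) p.

Definition has_partials (f : R -> R -> R) (x y : R) : Prop :=
  ex_derive (fun t => f t y) x /\ ex_derive (fun t => f x t) y.

Definition C2_on (Om : R * R -> Prop) (u : R -> R -> R) : Prop :=
  forall x y, Om (x, y) ->
    has_partials u x y /\ has_partials (dx u) x y /\ has_partials (dy u) x y /\
    cont2 u (x, y) /\ cont2 (dx u) (x, y) /\ cont2 (dy u) (x, y) /\
    cont2 (dx (dx u)) (x, y) /\ cont2 (dy (dx u)) (x, y) /\
    cont2 (dx (dy u)) (x, y) /\ cont2 (dy (dy u)) (x, y).

Definition Sing (Om : R * R -> Prop) (u : R -> R -> R) (p : R * R) : Prop :=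
  Om p /\ dx u (fst p) (snd p) - snd p = 0 /\ dy u (fst p) (snd p) + fst p = 0.

(* Unit vector field N(u) (meaningful off S(u)). *)
Definition Nu (u : R -> R -> R) (p : R * R) : R * R :=
  let a := dx u (fst p) (snd p) - snd p in
  let b := dy u (fst p) (snd p) + fst p in
  (a / sqrt (a ^ 2 + b ^ 2), b / sqrt (a ^ 2 + b ^ 2)).

Definition regular_C1_curve (g1 g2 : R -> R) (a b : R) : Prop :=
  a < b /\
  (forall t, a < t < b ->
     ex_derive g1 t /\ ex_derive g2 t /\
     continuous (Derive g1) t /\ continuous (Derive g2) t /\
     (Derive g1 t, Derive g2 t) <> (0, 0)) /\
  (forall s t, a < s < b -> a < t < b -> (g1 s, g2 s) = (g1 t, g2 t) -> s = t).

Definition trace (g1 g2 : R -> R) (a b : R) (p : R * R) : Prop :=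
  exists t, a < t < b /\ p = (g1 t, g2 t).

(* Identify R^2 with C and write V = (u_x - y, u_y + x), so that N(u) = V / |V|.  Along
   Gamma_s the field V vanishes, and its Jacobian J (the Hessian of u plus a rotation) kills
   the tangent but not the normal n; hence V(p) is close to l J n near Gamma_s, where l is
   the signed distance to the curve.  So the direction of V^2 extends to a continuous unit
   field on the whole disk B_eps(p0) (the direction of (J n)^2 on Gamma_s), and since the
   disk is simply connected this field has a continuous square root H there (lifted along
   radii).  On each connected side B^+, B^- we get N(u) = +H or N(u) = -H, so the one-sided
   limits are +-H(p0); the signs differ because V(p0 + r n), close to r J n, changes
   direction with the sign of r. *)

From Stdlib Require Import Reals Lra Lia ClassicalEpsilon.
From Coquelicot Require Import Coquelicot.
Open Scope R_scope.

Lemma Cmod_sub_sym (x y : C) : Cmod (x - y) = Cmod (y - x).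
Proof. rewrite <- Cmod_opp; f_equal; ring. Qed.

Lemma Cmod_sub_triangle (x y z : C) : Cmod (x - z) <= Cmod (x - y) + Cmod (y - z).
Proof. replace (x - z)%C with ((x - y) + (y - z))%C by ring. apply Cmod_triangle. Qed.

Lemma Cmod_sub_diag (x : C) : Cmod (x - x) = 0.
Proof. replace (x - x)%C with (RtoC 0) by ring. apply Cmod_0. Qed.

Lemma Cmod_scal (r : R) (z : C) : Cmod (RtoC r * z) = Rabs r * Cmod z.
Proof. rewrite Cmod_mult, Cmod_R. reflexivity. Qed.

Lemma Cmod_double (z : C) : Cmod (z + z) = 2 * Cmod z.
Proof.
  replace (z + z)%C with (RtoC 2 * z)%C by ring.
  rewrite Cmod_scal, Rabs_right; lra.
Qed.

Lemma Cmod_rev_triangle (x y : C) : Rabs (Cmod x - Cmod y) <= Cmod (x - y).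
Proof.
  assert (Hx := Cmod_triangle (x - y) y). assert (Hy := Cmod_triangle (y - x) x).
  replace (x - y + y)%C with x in Hx by ring. replace (y - x + x)%C with y in Hy by ring.
  rewrite Cmod_sub_sym in Hy. apply Rabs_le; lra.
Qed.

Lemma Cmod_fst (z : C) : Rabs (fst z) <= Cmod z.
Proof. eapply Rle_trans; [apply Rmax_l | apply Rmax_Cmod]. Qed.

Lemma Cmod_snd (z : C) : Rabs (snd z) <= Cmod z.
Proof. eapply Rle_trans; [apply Rmax_r | apply Rmax_Cmod]. Qed.

Lemma Cmod_le_abs_sum (z : C) : Cmod z <= Rabs (fst z) + Rabs (snd z).
Proof.
  assert (H1 := Rabs_pos (fst z)). assert (H2 := Rabs_pos (snd z)).
  unfold Cmod. rewrite <- (sqrt_pow2 (Rabs (fst z) + Rabs (snd z))) by lra.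
  apply sqrt_le_1_alt. rewrite <- (pow2_abs (fst z)), <- (pow2_abs (snd z)). nra.
Qed.

Lemma Cmod_sqr (z : C) : Cmod z ^ 2 = fst z ^ 2 + snd z ^ 2.
Proof. unfold Cmod. rewrite pow2_sqrt; nra. Qed.

Lemma Cmod_le_all_eps (z : C) (K : R) : (forall w, 0 < w <= 1 -> Cmod z <= w * K) -> z = 0.
Proof.
  intros H. apply Cmod_eq_0. destruct (Cmod_ge_0 z) as [Hz | Hz]; [exfalso | auto].
  assert (HK : 0 < K) by (specialize (H 1 ltac:(lra)); lra).
  set (w := Rmin 1 (Cmod z / (2 * K))).
  assert (Hw : 0 < w) by (apply Rmin_pos; [lra | apply Rdiv_lt_0_compat; lra]).
  specialize (H w (conj Hw (Rmin_l _ _))).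
  assert (HwK : w * K <= Cmod z / (2 * K) * K) by (apply Rmult_le_compat_r; [lra | apply Rmin_r]).
  replace (Cmod z / (2 * K) * K) with (Cmod z / 2) in HwK by (field; lra). lra.
Qed.

Lemma RtoC_m1_mult (z : C) : (RtoC (-1) * z)%C = (- z)%C.
Proof. destruct z. unfold RtoC, Cmult, Copp. simpl. f_equal; ring. Qed.

Lemma Rabs_m1 : Rabs (-1) = 1.
Proof. rewrite Rabs_left; lra. Qed.

Lemma Csqr_eq_cases (x y : C) : (x * x)%C = (y * y)%C -> x = y \/ x = (- y)%C.
Proof.
  intro E. destruct (Req_dec (Cmod (x - y)) 0) as [h | h].
  - left. apply Cmod_eq_0 in h. replace x with (x - y + y)%C by ring. rewrite h. ring.
  - right. assert (Ez : ((x - y) * (x + y))%C = RtoC 0).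
    { replace ((x - y) * (x + y))%C with (x * x - y * y)%C by ring. rewrite E. ring. }
    destruct (Req_dec (Cmod (x + y)) 0) as [h' | h'].
    + apply Cmod_eq_0 in h'. replace x with (x + y - y)%C by ring. rewrite h'. ring.
    + apply (f_equal Cmod) in Ez. rewrite Cmod_mult, Cmod_0 in Ez.
      destruct (Rmult_integral _ _ Ez); contradiction.
Qed.

Lemma unit_not_near_both_signs (h x : C) :
  Cmod h = 1 -> Cmod (x - h) < 1 -> Cmod (x + h) < 1 -> False.
Proof.
  intros Hh H1 H2. assert (T := Cmod_triangle (x + h) (- (x - h))).
  replace (x + h + - (x - h))%C with (h + h)%C in T by ring.
  rewrite Cmod_opp, Cmod_double in T. lra.
Qed.

Lemma unit_sqr_dist (x y : C) : Cmod x = 1 -> Cmod y = 1 ->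
  Cmod (x * x - y * y) <= 2 * Cmod (x - y).
Proof.
  intros Hx Hy. replace (x * x - y * y)%C with ((x - y) * (x + y))%C by ring.
  rewrite Cmod_mult. assert (T := Cmod_triangle x y). assert (H0 := Cmod_ge_0 (x - y)). nra.
Qed.

Definition dot (v w : C) : R := fst v * fst w + snd v * snd w.

Lemma dot_bound (v w : C) : Rabs (dot v w) <= Cmod v * Cmod w.
Proof.
  replace (dot v w) with (Re (Cconj v * w)) by (unfold dot, Re, Cconj, Cmult; simpl; ring).
  rewrite <- Cmod_conj, <- Cmod_mult. apply re_le_Cmod.
Qed.

Lemma dot_self (v : C) : dot v v = Cmod v ^ 2.
Proof. rewrite Cmod_sqr. unfold dot. ring. Qed.

Lemma frame_decomp (t v : C) : 0 < Cmod t ->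
  v = (RtoC (dot t v / Cmod t ^ 2) * t + RtoC (dot (Ci * t) v / Cmod t ^ 2) * (Ci * t))%C.
Proof.
  intros Ht.
  assert (E : (RtoC (Cmod t ^ 2) * v = RtoC (dot t v) * t + RtoC (dot (Ci * t) v) * (Ci * t))%C)
    by (rewrite Cmod_sqr; destruct t, v; unfold dot, Ci, Cmult, Cplus; simpl; f_equal; ring).
  transitivity (RtoC (/ Cmod t ^ 2) * (RtoC (Cmod t ^ 2) * v))%C.
  - rewrite Cmult_assoc, <- RtoC_mult, Rinv_l, Cmult_1_l; [reflexivity | apply pow_nonzero; lra].
  - rewrite E. unfold Rdiv. rewrite !RtoC_mult. ring.
Qed.

Lemma orth_decomp (t v : C) : 0 < Cmod t -> dot t v = 0 ->
  v = (RtoC (dot (Ci * t) v / Cmod t ^ 2) * (Ci * t))%C.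
Proof.
  intros Ht Hdot. rewrite (frame_decomp t v Ht) at 1. rewrite Hdot, Rdiv_0_l, Cmult_0_l. ring.
Qed.

Lemma disk_Cmod (c : C) (r : R) (p : C) : 0 <= r -> disk c r p <-> Cmod (p - c) < r.
Proof.
  intros Hr. assert (E := Cmod_sqr (p - c)). assert (H0 := Cmod_ge_0 (p - c)).
  unfold disk. simpl in E. replace (fst p + - fst c) with (fst p - fst c) in E by ring.
  replace (snd p + - snd c) with (snd p - snd c) in E by ring.
  split; intro H.
  - destruct (Rlt_or_le (Cmod (p - c)) r) as [h | h]; auto. exfalso. nra.
  - nra.
Qed.

Definition normalize (z : C) : C := (RtoC (/ Cmod z) * z)%C.

Lemma normalize_unit (z : C) : 0 < Cmod z -> Cmod (normalize z) = 1.
Proof.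
  intro H. unfold normalize. rewrite Cmod_scal, Rabs_right; [field; lra |].
  left; apply Rinv_0_lt_compat; auto.
Qed.

Lemma normalize_mult (z w : C) : normalize (z * w) = (normalize z * normalize w)%C.
Proof.
  unfold normalize. rewrite Cmod_mult, Rinv_mult. destruct z, w; unfold Cmult; simpl; f_equal; ring.
Qed.

Lemma normalize_scal_pos (l : R) (z : C) : 0 < l -> normalize (RtoC l * z) = normalize z.
Proof.
  intros. unfold normalize. rewrite Cmod_scal, Rabs_right, Rinv_mult by lra.
  set (k := / Cmod z). destruct z; unfold Cmult; simpl; f_equal; field; lra.
Qed.

Lemma normalize_scal_neg (l : R) (z : C) : l < 0 -> normalize (RtoC l * z) = (- normalize z)%C.
Proof.
  intros. unfold normalize. rewrite Cmod_scal, Rabs_left, Rinv_mult by lra.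
  set (k := / Cmod z). destruct z; unfold Cmult, Copp; simpl; f_equal; field; lra.
Qed.

Lemma normalize_lipschitz (z w : C) : 0 < Cmod z -> 0 < Cmod w ->
  Cmod (normalize z - normalize w) <= 2 * Cmod (z - w) / Cmod w.
Proof.
  intros Hz Hw. unfold normalize.
  assert (T := Cmod_sub_triangle (RtoC (/ Cmod z) * z) (RtoC (/ Cmod w) * z) (RtoC (/ Cmod w) * w)).
  replace (RtoC (/ Cmod z) * z - RtoC (/ Cmod w) * z)%C
    with (RtoC ((Cmod w - Cmod z) * / (Cmod z * Cmod w)) * z)%C in T
    by (replace ((Cmod w - Cmod z) * / (Cmod z * Cmod w)) with (/ Cmod z - / Cmod w)
          by (field; lra);
        rewrite RtoC_minus; ring).
  replace (RtoC (/ Cmod w) * z - RtoC (/ Cmod w) * w)%C with (RtoC (/ Cmod w) * (z - w))%C in T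
    by ring.
  rewrite !Cmod_scal, Rabs_mult, !(Rabs_right (/ _)) in T
    by (left; apply Rinv_0_lt_compat; nra).
  replace (Rabs (Cmod w - Cmod z) * / (Cmod z * Cmod w) * Cmod z)
    with (Rabs (Cmod w - Cmod z) * / Cmod w) in T by (field; lra).
  assert (R := Cmod_rev_triangle w z). rewrite Cmod_sub_sym in R.
  assert (I : 0 < / Cmod w) by (apply Rinv_0_lt_compat; lra).
  unfold Rdiv. nra.
Qed.

Lemma normalize_perturb (z w : C) (k : R) : 0 < Cmod w -> 0 <= k <= 1/4 ->
  Cmod (z - w) <= k * Cmod w -> 0 < Cmod z /\ Cmod (normalize z - normalize w) <= 2 * k.
Proof.
  intros Hw Hk Hzw. assert (R := Cmod_rev_triangle z w). apply Rabs_le_between in R.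
  assert (Hz : 0 < Cmod z) by nra. split; auto.
  eapply Rle_trans; [apply normalize_lipschitz; auto |].
  apply (Rmult_le_reg_r (Cmod w)); auto. unfold Rdiv. rewrite Rmult_assoc, Rinv_l; lra.
Qed.

Definition Ccont_at (F : C -> C) (p : C) : Prop :=
  forall e, 0 < e -> exists d, 0 < d /\ forall z, Cmod (z - p) < d -> Cmod (F z - F p) < e.

Lemma Ccont_at_nonzero_near (F : C -> C) (p : C) : Ccont_at F p -> 0 < Cmod (F p) ->
  exists d, 0 < d /\ forall z, Cmod (z - p) < d -> 0 < Cmod (F z).
Proof.
  intros HF Hp. destruct (HF (Cmod (F p) / 2) ltac:(lra)) as [d [Hd H]].
  exists d. split; auto. intros z Hz. specialize (H z Hz).
  assert (R := Cmod_rev_triangle (F z) (F p)). apply Rabs_le_between in R. lra.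
Qed.

Lemma Ccont_at_normalize (F : C -> C) (p : C) : Ccont_at F p -> 0 < Cmod (F p) ->
  Ccont_at (fun z => normalize (F z)) p.
Proof.
  intros HF Hp e He. destruct (Ccont_at_nonzero_near F p HF Hp) as [d1 [Hd1 Hnz]].
  destruct (HF (e * Cmod (F p) / 4) ltac:(apply Rdiv_lt_0_compat; nra)) as [d2 [Hd2 H2]].
  exists (Rmin d1 d2). split; [apply Rmin_pos; auto |]. intros z Hz.
  specialize (Hnz z (Rlt_le_trans _ _ _ Hz (Rmin_l _ _))).
  specialize (H2 z (Rlt_le_trans _ _ _ Hz (Rmin_r _ _))).
  eapply Rle_lt_trans; [apply normalize_lipschitz; auto |].
  apply (Rmult_lt_reg_r (Cmod (F p))); auto.
  replace (2 * Cmod (F z - F p) / Cmod (F p) * Cmod (F p)) with (2 * Cmod (F z - F p))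
    by (field; lra).
  nra.
Qed.

Lemma Ccont_at_sqr (F : C -> C) (p : C) : Ccont_at F p -> Ccont_at (fun z => F z * F z)%C p.
Proof.
  intros HF e He. set (K := 2 * Cmod (F p) + 1).
  assert (HK : 0 < K) by (unfold K; assert (H0 := Cmod_ge_0 (F p)); lra).
  destruct (HF (Rmin 1 (e / K)) ltac:(apply Rmin_pos; [lra | apply Rdiv_lt_0_compat; lra]))
    as [d [Hd H]].
  exists d. split; auto. intros z Hz. specialize (H z Hz).
  assert (m1 := Rmin_l 1 (e / K)). assert (m2 := Rmin_r 1 (e / K)).
  replace (F z * F z - F p * F p)%C with ((F z - F p) * ((F z - F p) + (F p + F p)))%C by ring.
  rewrite Cmod_mult. assert (T := Cmod_triangle (F z - F p) (F p + F p)). rewrite Cmod_double in T.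
  assert (H0 := Cmod_ge_0 (F z - F p)).
  apply Rle_lt_trans with (Cmod (F z - F p) * K); [apply Rmult_le_compat_l; unfold K; lra |].
  apply Rmult_lt_compat_r with (r := K) in H; auto.
  apply Rlt_le_trans with (Rmin 1 (e / K) * K); auto.
  apply Rle_trans with (e / K * K); [apply Rmult_le_compat_r; lra | right; field; lra].
Qed.

Lemma Ccont_at_scal (F : C -> C) (s : R) (p : C) :
  Ccont_at F p -> Ccont_at (fun z => RtoC s * F z)%C p.
Proof.
  intros HF e He. destruct (HF (e / (Rabs s + 1))) as [d [Hd H]].
  { apply Rdiv_lt_0_compat; [| assert (H0 := Rabs_pos s)]; lra. }
  exists d. split; auto. intros z Hz.
  replace (RtoC s * F z - RtoC s * F p)%C with (RtoC s * (F z - F p))%C by ring.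
  rewrite Cmod_scal. specialize (H z Hz). assert (H0 := Rabs_pos s).
  assert (H1 := Cmod_ge_0 (F z - F p)).
  apply Rle_lt_trans with ((Rabs s + 1) * Cmod (F z - F p)); [nra |].
  apply Rmult_lt_compat_l with (r := Rabs s + 1) in H; [| lra].
  replace ((Rabs s + 1) * (e / (Rabs s + 1))) with e in H by (field; lra). exact H.
Qed.

Lemma Ccont_at_local (F F' : C -> C) (p : C) (d : R) : 0 < d ->
  (forall z, Cmod (z - p) < d -> F z = F' z) -> Ccont_at F' p -> Ccont_at F p.
Proof.
  intros Hd Heq HF e He. destruct (HF e He) as [d' [Hd' H]].
  exists (Rmin d d'). split; [apply Rmin_pos; auto |]. intros z Hz.
  rewrite !Heq; [| rewrite Cmod_sub_diag; auto | apply (Rlt_le_trans _ _ _ Hz (Rmin_l _ _))].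
  apply H, (Rlt_le_trans _ _ _ Hz (Rmin_r _ _)).
Qed.

Lemma Ccont_at_close_scaled (F H : C -> C) (s : R) (p : C) :
  Ccont_at F p -> Ccont_at H p -> Rabs s = 1 -> F p = (RtoC s * H p)%C ->
  exists d, 0 < d /\ forall z, Cmod (z - p) < d -> Cmod (F z - RtoC s * H z) < 1.
Proof.
  intros CF CH Hs E.
  destruct (CF (1 / 2) ltac:(lra)) as [d1 [Hd1 E1]].
  destruct (CH (1 / 2) ltac:(lra)) as [d2 [Hd2 E2]].
  exists (Rmin d1 d2). split; [apply Rmin_pos; auto |]. intros z Hz.
  specialize (E1 z (Rlt_le_trans _ _ _ Hz (Rmin_l _ _))).
  specialize (E2 z (Rlt_le_trans _ _ _ Hz (Rmin_r _ _))).
  replace (F z - RtoC s * H z)%C with ((F z - F p) + RtoC s * (H p - H z))%C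
    by (rewrite E; ring).
  eapply Rle_lt_trans; [apply Cmod_triangle |].
  rewrite Cmod_scal, Hs, (Cmod_sub_sym (H p)). lra.
Qed.

Lemma open2_interior (P : C -> Prop) :
  open2 (fun p => exists d, 0 < d /\ forall z, Cmod (z - p) < d -> P z).
Proof.
  intros p [d [Hd Hz]]. exists (d / 2). split; [lra |]. intros q Hq.
  apply disk_Cmod in Hq; [| lra]. exists (d / 2). split; [lra |]. intros z Hz'.
  apply Hz. assert (T := Cmod_sub_triangle z q p). lra.
Qed.

Lemma connected_sign (B : C -> Prop) (F H : C -> C) : connected2 B ->
  (forall p, B p ->
     Ccont_at F p /\ Ccont_at H p /\ Cmod (H p) = 1 /\ (F p * F p)%C = (H p * H p)%C) ->
  exists s, (s = 1 \/ s = -1) /\ forall p, B p -> F p = (RtoC s * H p)%C.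
Proof.
  intros Hconn HB.
  set (U := fun s p => exists d, 0 < d /\
              forall z, Cmod (z - p) < d -> Cmod (F z - RtoC s * H z) < 1).
  assert (Uin : forall s p, B p -> Rabs s = 1 -> F p = (RtoC s * H p)%C -> U s p).
  { intros s p Bp Hs E. destruct (HB p Bp) as [CF [CH _]]. apply Ccont_at_close_scaled; auto. }
  assert (Udisj : forall p, B p -> U 1 p -> U (-1) p -> False).
  { intros p Bp [d1 [Hd1 E1]] [d2 [Hd2 E2]].
    specialize (E1 p ltac:(rewrite Cmod_sub_diag; auto)).
    specialize (E2 p ltac:(rewrite Cmod_sub_diag; auto)).
    apply (unit_not_near_both_signs (H p) (F p)); [apply HB; auto | |].
    - replace (F p - H p)%C with (F p - RtoC 1 * H p)%C by ring. exact E1.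
    - replace (F p + H p)%C with (F p - RtoC (-1) * H p)%C by (rewrite RtoC_m1_mult; ring).
      exact E2. }
  assert (Hroot : forall p, B p ->
    (F p = (RtoC 1 * H p)%C /\ U 1 p) \/ (F p = (RtoC (-1) * H p)%C /\ U (-1) p)).
  { intros p Bp. destruct (HB p Bp) as [_ [_ [_ E]]].
    destruct (Csqr_eq_cases _ _ E) as [E' | E'].
    - assert (E1 : F p = (RtoC 1 * H p)%C) by (rewrite E'; ring).
      left. split; auto. apply Uin; auto. apply Rabs_R1.
    - assert (E1 : F p = (RtoC (-1) * H p)%C) by (rewrite E', RtoC_m1_mult; reflexivity).
      right. split; auto. apply Uin; auto. apply Rabs_m1. }
  destruct (classic (exists p, B p /\ U (-1) p)) as [HUm | HUm].
  - exists (-1). split; [right; reflexivity |]. intros p Bp.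
    destruct (Hroot p Bp) as [[_ U1] | [E _]]; auto. exfalso.
    destruct (Hconn (U 1) (U (-1)) (open2_interior _) (open2_interior _)) as [q [Bq [Uq1 Uq2]]].
    + intros q Bq. destruct (Hroot q Bq) as [[_ Uq] | [_ Uq]]; auto.
    + exists p. auto.
    + exact HUm.
    + exact (Udisj q Bq Uq1 Uq2).
  - exists 1. split; [left; reflexivity |]. intros p Bp.
    destruct (Hroot p Bp) as [[E _] | [_ Um]]; auto. exfalso. apply HUm. exists p. auto.
Qed.

Lemma filterlim_within_scaled (B : C -> Prop) (N H : C -> C) (s : R) (p0 : C) :
  Rabs s = 1 -> (forall p, B p -> N p = (RtoC s * H p)%C) -> Ccont_at H p0 ->
  filterlim N (within B (locally p0)) (locally (RtoC s * H p0)%C).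
Proof.
  intros Hs HB HC. apply filterlim_locally. intro e.
  destruct (HC e (cond_pos e)) as [d [Hd E]].
  exists (mkposreal (d / 2) ltac:(lra)). intros y [Hy1 Hy2] By. rewrite HB by auto.
  change (Rabs (fst y - fst p0) < d / 2) in Hy1. change (Rabs (snd y - snd p0) < d / 2) in Hy2.
  assert (Cy : Cmod (y - p0) < d).
  { eapply Rle_lt_trans; [apply Cmod_le_abs_sum |]. simpl. unfold Rminus in *. lra. }
  specialize (E y Cy).
  assert (Cz : Cmod (RtoC s * H y - RtoC s * H p0) < e).
  { replace (RtoC s * H y - RtoC s * H p0)%C with (RtoC s * (H y - H p0))%C by ring.
    rewrite Cmod_scal, Hs. lra. }
  split.
  - apply (Rle_lt_trans _ _ _ (Cmod_fst (RtoC s * H y - RtoC s * H p0)%C) Cz).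
  - apply (Rle_lt_trans _ _ _ (Cmod_snd (RtoC s * H y - RtoC s * H p0)%C) Cz).
Qed.

(** * Square roots on the unit circle *)

Definition csqrt_unit (g : C) : C :=
  (sqrt ((1 + fst g) / 2),
   if Rle_dec 0 (snd g) then sqrt ((1 - fst g) / 2) else - sqrt ((1 - fst g) / 2)).

Lemma csqrt_unit_spec (g : C) :
  Cmod g = 1 -> (csqrt_unit g * csqrt_unit g)%C = g /\ Cmod (csqrt_unit g) = 1.
Proof.
  intro Hg. assert (Hsq := Cmod_sqr g). rewrite Hg in Hsq.
  destruct g as [x y]; simpl in Hsq.
  assert (HA : 0 <= (1 + x) / 2) by nra. assert (HB : 0 <= (1 - x) / 2) by nra.
  assert (EA := sqrt_sqrt _ HA). assert (EB := sqrt_sqrt _ HB).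
  assert (Hprod : sqrt ((1 + x) / 2) * sqrt ((1 - x) / 2) = Rabs y / 2).
  { rewrite <- sqrt_mult by lra.
    rewrite <- (sqrt_pow2 (Rabs y / 2)) by (apply Rmult_le_pos; [apply Rabs_pos | lra]).
    f_equal. unfold Rdiv. rewrite Rpow_mult_distr, pow2_abs. nra. }
  unfold csqrt_unit; simpl. split.
  - destruct (Rle_dec 0 y) as [Hy | Hy];
      [rewrite Rabs_right in Hprod by lra | rewrite Rabs_left in Hprod by lra];
      unfold Cmult; simpl; f_equal; nra.
  - unfold Cmod; simpl. transitivity (sqrt 1); [f_equal | apply sqrt_1].
    destruct (Rle_dec 0 y); nra.
Qed.

Lemma Cmod_sub_le_sqr_sub (rho r : C) : Cmod rho = 1 -> Cmod r = 1 ->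
  Cmod (r - rho) < 1 -> Cmod (r - rho) <= Cmod (r * r - rho * rho).
Proof.
  intros H1 H2 H3.
  replace (r * r - rho * rho)%C with ((r - rho) * (r + rho))%C by ring. rewrite Cmod_mult.
  assert (T := Cmod_triangle (rho - r) (r + rho)).
  replace (rho - r + (r + rho))%C with (rho + rho)%C in T by ring.
  rewrite Cmod_double, Cmod_sub_sym in T. assert (H0 := Cmod_ge_0 (r - rho)). nra.
Qed.

Definition closest_root (rho r : C) : C :=
  if Rlt_dec (Cmod (r - rho)) 1 then r else (- r)%C.

Lemma closest_root_spec (rho r : C) : Cmod rho = 1 -> Cmod r = 1 ->
  Cmod (r * r - rho * rho) < 1/8 ->
  Cmod (closest_root rho r) = 1 /\
  (closest_root rho r * closest_root rho r)%C = (r * r)%C /\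
  Cmod (closest_root rho r - rho) <= Cmod (r * r - rho * rho).
Proof.
  intros H1 H2 H3. unfold closest_root. destruct (Rlt_dec (Cmod (r - rho)) 1) as [h | h].
  - repeat split; auto. apply Cmod_sub_le_sqr_sub; auto.
  - assert (Esq : (- r * - r)%C = (r * r)%C) by ring. rewrite Esq, Cmod_opp.
    repeat split; auto. rewrite <- Esq. apply Cmod_sub_le_sqr_sub; rewrite ?Cmod_opp; auto.
    replace (r * r - rho * rho)%C with ((r - rho) * (r + rho))%C in H3 by ring.
    replace (- r - rho)%C with (- (r + rho))%C by ring.
    rewrite Cmod_mult in H3. rewrite Cmod_opp. assert (H0 := Cmod_ge_0 (r + rho)). nra.
Qed.

Lemma unit_sqrt_unique (r1 r2 : C) : Cmod r1 = 1 -> (r1 * r1)%C = (r2 * r2)%C ->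
  Cmod (r1 - r2) < 2 -> r1 = r2.
Proof.
  intros H1 E H2. destruct (Csqr_eq_cases r1 r2 E) as [-> | ->]; auto.
  replace (- r2 - r2)%C with (- (r2 + r2))%C in H2 by ring.
  rewrite Cmod_opp, Cmod_double, <- (Cmod_opp r2), H1 in H2. lra.
Qed.

(** * A continuous square root on a disk *)

Lemma ratio_in_unit (k n : nat) : (k <= n)%nat -> (0 < n)%nat -> 0 <= INR k / INR n <= 1.
Proof.
  intros Hk Hn. apply le_INR in Hk. apply lt_0_INR in Hn. assert (H0 := pos_INR k).
  split; [apply Rdiv_le_0_compat; lra |].
  apply (Rmult_le_reg_r (INR n)); auto. unfold Rdiv. rewrite Rmult_assoc, Rinv_l; lra.
Qed.

Lemma ratio_succ_dist (k n : nat) : (0 < n)%nat ->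
  Rabs (INR (S k) / INR n - INR k / INR n) <= / INR n.
Proof.
  intro Hn. apply lt_0_INR in Hn. rewrite S_INR.
  replace ((INR k + 1) / INR n - INR k / INR n) with (/ INR n) by (field; lra).
  rewrite Rabs_right; [lra | left; apply Rinv_0_lt_compat; lra].
Qed.

Lemma ratio_mul_r (j n m : nat) : (0 < n)%nat -> (0 < m)%nat ->
  INR (j * m) / INR (n * m) = INR j / INR n.
Proof. intros Hn Hm. apply lt_0_INR in Hn, Hm. rewrite !mult_INR. field; lra. Qed.

Lemma ratio_refine_dist (j i n m : nat) : (0 < n)%nat -> (0 < m)%nat -> (i <= m)%nat ->
  Rabs (INR (j * m + i) / INR (n * m) - INR j / INR n) <= / INR n.
Proof.
  intros Hn Hm Hi. apply lt_0_INR in Hn, Hm. apply le_INR in Hi. assert (H0 := pos_INR i).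
  rewrite plus_INR, !mult_INR.
  replace ((INR j * INR m + INR i) / (INR n * INR m) - INR j / INR n)
    with (INR i / INR m * / INR n) by (field; lra).
  rewrite Rabs_right.
  - rewrite <- (Rmult_1_l (/ INR n)) at 2. apply Rmult_le_compat_r.
    + left; apply Rinv_0_lt_compat; lra.
    + apply (Rmult_le_reg_r (INR m)); auto. unfold Rdiv. rewrite Rmult_assoc, Rinv_l; lra.
  - apply Rle_ge, Rmult_le_pos; [apply Rdiv_le_0_compat | left; apply Rinv_0_lt_compat]; lra.
Qed.

Section SqrtLift.

Variables (G : C -> C) (c : C) (rad : R).
Hypothesis G_unit : forall q, Cmod (q - c) < rad -> Cmod (G q) = 1.
Hypothesis G_cont : forall q, Cmod (q - c) < rad -> Ccont_at G q.

Definition radial (p : C) (s : R) : C := (c + RtoC s * (p - c))%C.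

Lemma radial_1 (p : C) : radial p 1 = p.
Proof. unfold radial. ring. Qed.

Lemma radial_in_disk (p : C) (s : R) :
  Cmod (p - c) < rad -> 0 <= s <= 1 -> Cmod (radial p s - c) < rad.
Proof.
  intros Hp Hs. unfold radial.
  replace (c + RtoC s * (p - c) - c)%C with (RtoC s * (p - c))%C by ring.
  rewrite Cmod_scal, Rabs_right by lra. assert (H0 := Cmod_ge_0 (p - c)). nra.
Qed.

Lemma radial_dist (p q : C) (s t : R) :
  Cmod (radial p s - radial q t) <= Rabs (s - t) * Cmod (q - c) + Rabs s * Cmod (p - q).
Proof.
  unfold radial.
  replace (c + RtoC s * (p - c) - (c + RtoC t * (q - c)))%C
    with (RtoC (s - t) * (q - c) + RtoC s * (p - q))%C by (rewrite RtoC_minus; ring).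
  eapply Rle_trans; [apply Cmod_triangle |]. rewrite !Cmod_scal. lra.
Qed.

(* Discrete lifting of a square root of [G] along the radius from [c] to [p]. *)
Fixpoint root_chain (p : C) (n k : nat) : C :=
  match k with
  | O => csqrt_unit (G c)
  | S k' => closest_root (root_chain p n k') (csqrt_unit (G (radial p (INR (S k') / INR n))))
  end.

Definition fine_pair (p q : C) (n : nat) : Prop :=
  (0 < n)%nat /\ forall s s', 0 <= s <= 1 -> 0 <= s' <= 1 -> Rabs (s - s') <= / INR n ->
    Cmod (G (radial p s) - G (radial q s')) < 1/8.

Lemma fine_pair_step (p q : C) (n k : nat) : fine_pair p q n -> (S k <= n)%nat ->
  Cmod (G (radial p (INR (S k) / INR n)) - G (radial q (INR k / INR n))) < 1/8.
Proof.
  intros [Hn Hf] Hk. apply Hf; try apply ratio_in_unit; try lia. apply ratio_succ_dist; auto.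
Qed.

Lemma fine_pair_diag (p q : C) (n k : nat) : fine_pair p q n -> (k <= n)%nat ->
  Cmod (G (radial p (INR k / INR n)) - G (radial q (INR k / INR n))) < 1/8.
Proof.
  intros [Hn Hf] Hk. apply Hf; try apply ratio_in_unit; auto.
  rewrite Rminus_diag, Rabs_R0. left; apply Rinv_0_lt_compat, lt_0_INR; auto.
Qed.

Lemma fine_pair_mul (p q : C) (n m : nat) : fine_pair p q n -> (0 < m)%nat -> fine_pair p q (n * m).
Proof.
  intros [Hn Hf] Hm. split; [lia |]. intros s s' Hs Hs' Hss. apply Hf; auto.
  eapply Rle_trans; [exact Hss |]. apply lt_0_INR in Hn.
  apply Rinv_le_contravar; auto. rewrite mult_INR.
  assert (1 <= INR m) by (apply (le_INR 1); lia). nra.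
Qed.

Section FixedRadius.

Variable p : C.
Hypothesis Hp : Cmod (p - c) < rad.

Lemma root_chain_spec (n : nat) : fine_pair p p n -> forall k, (k <= n)%nat ->
  Cmod (root_chain p n k) = 1 /\
  (root_chain p n k * root_chain p n k)%C = G (radial p (INR k / INR n)).
Proof.
  intros Hf. induction k as [| k IH]; intros Hk.
  - simpl. rewrite Rdiv_0_l. unfold radial. replace (c + RtoC 0 * (p - c))%C with c by ring.
    destruct (csqrt_unit_spec (G c)) as [E U]; auto.
    apply G_unit. rewrite Cmod_sub_diag. assert (H0 := Cmod_ge_0 (p - c)). lra.
  - destruct IH as [U E]; [lia |]. cbn [root_chain].
    assert (Hg : Cmod (G (radial p (INR (S k) / INR n))) = 1).
    { apply G_unit, radial_in_disk, ratio_in_unit; auto. apply Hf. }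
    destruct (csqrt_unit_spec _ Hg) as [E' U'].
    destruct (closest_root_spec (root_chain p n k) (csqrt_unit (G (radial p (INR (S k) / INR n)))))
      as [U2 [E2 _]]; auto.
    + rewrite E, E'. apply fine_pair_step; auto.
    + split; auto. rewrite E2; auto.
Qed.

Lemma root_chain_step (n k : nat) : fine_pair p p n -> (S k <= n)%nat ->
  Cmod (root_chain p n (S k) - root_chain p n k) <=
  Cmod (G (radial p (INR (S k) / INR n)) - G (radial p (INR k / INR n))).
Proof.
  intros Hf Hk. destruct (root_chain_spec n Hf k) as [U E]; [lia |]. cbn [root_chain].
  assert (Hg : Cmod (G (radial p (INR (S k) / INR n))) = 1).
  { apply G_unit, radial_in_disk, ratio_in_unit; auto. apply Hf. }
  destruct (csqrt_unit_spec _ Hg) as [E' U'].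
  destruct (closest_root_spec (root_chain p n k) (csqrt_unit (G (radial p (INR (S k) / INR n)))))
    as [_ [_ D]]; auto.
  - rewrite E, E'. apply fine_pair_step; auto.
  - rewrite E, E' in D. exact D.
Qed.

Lemma root_chain_drift (n m j : nat) : fine_pair p p n -> (0 < m)%nat -> (j < n)%nat ->
  root_chain p (n * m) (j * m) = root_chain p n j ->
  forall i, (i <= m)%nat ->
  Cmod (root_chain p (n * m) (j * m + i) - root_chain p n j) <=
  Cmod (G (radial p (INR (j * m + i) / INR (n * m))) - G (radial p (INR j / INR n))).
Proof.
  intros Hf Hm Hj Ejm. assert (Hfm := fine_pair_mul _ _ _ _ Hf Hm). assert (Hn := proj1 Hf).
  assert (Hclose : forall i, (i <= m)%nat ->
    Cmod (G (radial p (INR (j * m + i) / INR (n * m))) - G (radial p (INR j / INR n))) < 1/8).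
  { intros i Hi. apply Hf; try apply ratio_in_unit; try nia. apply ratio_refine_dist; auto. }
  induction i as [| i IH]; intros Hi.
  - rewrite Nat.add_0_r, Ejm, Cmod_sub_diag. apply Cmod_ge_0.
  - assert (IH' := IH ltac:(lia)). rewrite Nat.add_succ_r.
    destruct (root_chain_spec _ Hfm (S (j * m + i))) as [U1 E1]; [nia |].
    destruct (root_chain_spec _ Hf j) as [U2 E2]; [lia |].
    assert (St := root_chain_step _ (j * m + i) Hfm ltac:(nia)).
    assert (Hs := fine_pair_step _ _ _ (j * m + i) Hfm ltac:(nia)).
    assert (Hc := Hclose i ltac:(lia)).
    assert (T := Cmod_sub_triangle (root_chain p (n * m) (S (j * m + i)))
                   (root_chain p (n * m) (j * m + i)) (root_chain p n j)).
    eapply Rle_trans; [apply Cmod_sub_le_sqr_sub; auto; lra |].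
    rewrite E1, E2, <- Nat.add_succ_r. lra.
Qed.

Lemma root_chain_refine (n m : nat) : fine_pair p p n -> (0 < m)%nat ->
  forall j, (j <= n)%nat -> root_chain p (n * m) (j * m) = root_chain p n j.
Proof.
  intros Hf Hm. assert (Hfm := fine_pair_mul _ _ _ _ Hf Hm). assert (Hn := proj1 Hf).
  induction j as [| j IH]; intros Hj; [reflexivity |].
  assert (D := root_chain_drift _ _ _ Hf Hm Hj (IH ltac:(lia)) m (le_n m)).
  replace (S j * m)%nat with (j * m + m)%nat by lia.
  destruct (root_chain_spec _ Hfm (j * m + m)) as [U1 E1]; [nia |].
  destruct (root_chain_spec _ Hf (S j)) as [U2 E2]; [lia |].
  assert (St := root_chain_step _ j Hf Hj).
  assert (B1 : Cmod (G (radial p (INR (j * m + m) / INR (n * m))) - G (radial p (INR j / INR n)))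
               < 1/8).
  { apply Hf; try apply ratio_in_unit; try nia. apply ratio_refine_dist; auto. }
  assert (B2 := fine_pair_step _ _ _ j Hf Hj).
  apply unit_sqrt_unique; auto.
  - rewrite E1, E2. replace (j * m + m)%nat with (S j * m)%nat by lia. rewrite ratio_mul_r; auto.
  - assert (T := Cmod_sub_triangle (root_chain p (n * m) (j * m + m)) (root_chain p n j)
                   (root_chain p n (S j))).
    rewrite (Cmod_sub_sym (root_chain p n j)) in T. lra.
Qed.

Lemma root_chain_mesh_indep (n m : nat) : fine_pair p p n -> fine_pair p p m ->
  root_chain p n n = root_chain p m m.
Proof.
  intros Hn Hm.
  rewrite <- (root_chain_refine n m Hn (proj1 Hm) n (le_n n)).
  rewrite <- (root_chain_refine m n Hm (proj1 Hn) m (le_n m)).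
  rewrite (Nat.mul_comm m n). reflexivity.
Qed.

End FixedRadius.

Lemma root_chain_close (p q : C) (n : nat) : Cmod (p - c) < rad -> Cmod (q - c) < rad ->
  fine_pair p p n -> fine_pair q q n -> fine_pair q p n ->
  forall k, (k <= n)%nat ->
  Cmod (root_chain q n k - root_chain p n k) <=
  Cmod (G (radial q (INR k / INR n)) - G (radial p (INR k / INR n))).
Proof.
  intros Hp Hq Hpp Hqq Hqp. induction k as [| k IH]; intros Hk.
  - simpl. rewrite Cmod_sub_diag. apply Cmod_ge_0.
  - assert (IH' := IH ltac:(lia)).
    destruct (root_chain_spec q Hq _ Hqq (S k)) as [U1 E1]; [lia |].
    destruct (root_chain_spec p Hp _ Hpp (S k)) as [U2 E2]; [lia |].
    assert (Sq := root_chain_step q Hq _ _ Hqq Hk). assert (Sp := root_chain_step p Hp _ _ Hpp Hk).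
    assert (Bq := fine_pair_step _ _ _ _ Hqq Hk). assert (Bp := fine_pair_step _ _ _ _ Hpp Hk).
    assert (Bqp := fine_pair_diag _ _ _ k Hqp ltac:(lia)).
    assert (T1 := Cmod_sub_triangle (root_chain q n (S k)) (root_chain q n k)
                    (root_chain p n (S k))).
    assert (T2 := Cmod_sub_triangle (root_chain q n k) (root_chain p n k) (root_chain p n (S k))).
    rewrite (Cmod_sub_sym (root_chain p n k)) in T2.
    eapply Rle_trans; [apply Cmod_sub_le_sqr_sub; auto; lra |]. rewrite E1, E2. lra.
Qed.

Lemma radial_lebesgue (p : C) (e : R) : Cmod (p - c) < rad -> 0 < e ->
  exists d, 0 < d /\ forall s, 0 <= s <= 1 -> exists t,
    forall z, Cmod (z - radial p s) < d -> Cmod (G z - G (radial p t)) < e.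
Proof.
  intros Hp He. set (K := Cmod (p - c) + 1).
  assert (HK : 0 < K) by (unfold K; assert (H0 := Cmod_ge_0 (p - c)); lra).
  set (P := fun t d => 0 < d /\ (0 <= t <= 1 -> forall z, Cmod (z - radial p t) < d ->
                                   Cmod (G z - G (radial p t)) < e)).
  assert (Pex : forall t, exists d, P t d).
  { intro t. destruct (classic (0 <= t <= 1)) as [Ht | Ht].
    - destruct (G_cont _ (radial_in_disk p t Hp Ht) e He) as [d Hd]. exists d; split; [apply Hd |].
      intros _. apply Hd.
    - exists 1. split; [lra | contradiction]. }
  destruct (choice P Pex) as [f fP].
  assert (fpos : forall t, 0 < f t / K) by (intro t; apply Rdiv_lt_0_compat; [apply fP | auto]).
  destruct (compactness_value_1d 0 1 (fun t => mkposreal _ (fpos t))) as [d Hd].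
  exists d. split; [apply cond_pos |]. intros s Hs.
  destruct (classic (exists t, 0 <= t <= 1 /\ Rabs (s - t) < f t / K /\ d <= f t / K))
    as [[t [Ht [Hst Hdt]]] | Hno]; [| exfalso; exact (Hd s Hs Hno)].
  exists t. intros z Hz. apply (proj2 (fP t) Ht).
  assert (R := radial_dist p p s t). rewrite Cmod_sub_diag, Rmult_0_r, Rplus_0_r in R.
  assert (T := Cmod_sub_triangle z (radial p s) (radial p t)).
  assert (Rabs (s - t) * Cmod (p - c) <= f t / K * Cmod (p - c))
    by (apply Rmult_le_compat_r; [apply Cmod_ge_0 | lra]).
  assert (f t / K * K = f t) by (field; lra). unfold K in *. nra.
Qed.

Lemma fine_pair_locally (p : C) : Cmod (p - c) < rad ->
  exists n r, 0 < r /\ r <= rad - Cmod (p - c) /\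
    forall p1 p2, Cmod (p1 - p) < r -> Cmod (p2 - p) < r -> fine_pair p1 p2 n.
Proof.
  intros Hp. destruct (radial_lebesgue p (1/16) Hp ltac:(lra)) as [d [Hd Hleb]].
  set (K := Cmod (p - c) + 1).
  assert (HK : 0 < K) by (unfold K; assert (H0 := Cmod_ge_0 (p - c)); lra).
  destruct (archimed_cor1 (d / (2 * K))) as [n [Hn1 Hn2]]; [apply Rdiv_lt_0_compat; lra |].
  exists n, (Rmin (d / 2) (rad - Cmod (p - c))).
  split; [apply Rmin_pos; lra |]. split; [apply Rmin_r |].
  intros p1 p2 H1 H2. split; auto. intros s s' Hs Hs' Hss.
  assert (Hr := Rmin_l (d / 2) (rad - Cmod (p - c))).
  destruct (Hleb s Hs) as [t Ht].
  assert (D1 := radial_dist p1 p s s). assert (D2 := radial_dist p2 p s' s).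
  rewrite Rminus_diag, Rabs_R0, Rmult_0_l, Rplus_0_l in D1.
  rewrite (Rabs_right s) in D1 by lra. rewrite (Rabs_right s') in D2 by lra.
  assert (Hsd : Rabs (s' - s) * Cmod (p - c) <= d / 2).
  { rewrite Rabs_minus_sym. apply Rle_trans with (/ INR n * K).
    - apply Rmult_le_compat; try apply Rabs_pos; try apply Cmod_ge_0; auto. unfold K; lra.
    - apply Rmult_lt_compat_r with (r := K) in Hn1; auto.
      replace (d / (2 * K) * K) with (d / 2) in Hn1 by (field; lra). lra. }
  assert (P1 := Cmod_ge_0 (p1 - p)). assert (P2 := Cmod_ge_0 (p2 - p)).
  assert (A1 := Ht (radial p1 s) ltac:(nra)). assert (A2 := Ht (radial p2 s') ltac:(nra)).
  assert (T := Cmod_sub_triangle (G (radial p1 s)) (G (radial p t)) (G (radial p2 s'))).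
  rewrite (Cmod_sub_sym (G (radial p t))) in T. lra.
Qed.

Definition mesh_index (p : C) : nat := epsilon (inhabits 0%nat) (fine_pair p p).

Definition sqrt_lift (p : C) : C := root_chain p (mesh_index p) (mesh_index p).

Lemma mesh_index_fine (p : C) : Cmod (p - c) < rad -> fine_pair p p (mesh_index p).
Proof.
  intros Hp. unfold mesh_index. apply epsilon_spec.
  destruct (fine_pair_locally p Hp) as [n [r [Hr [_ H]]]].
  exists n. apply H; rewrite Cmod_sub_diag; auto.
Qed.

Lemma sqrt_lift_spec (p : C) : Cmod (p - c) < rad ->
  Cmod (sqrt_lift p) = 1 /\ (sqrt_lift p * sqrt_lift p)%C = G p.
Proof.
  intros Hp. assert (Hf := mesh_index_fine p Hp).
  destruct (root_chain_spec p Hp _ Hf (mesh_index p) (le_n _)) as [U E].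
  split; auto. unfold sqrt_lift. rewrite E, Rdiv_diag, radial_1; auto.
  apply not_0_INR. pose proof (proj1 Hf). lia.
Qed.

Lemma sqrt_lift_cont (p : C) : Cmod (p - c) < rad -> Ccont_at sqrt_lift p.
Proof.
  intros Hp e He.
  destruct (fine_pair_locally p Hp) as [n [r [Hr [Hrr Hfine]]]].
  destruct (G_cont p Hp e He) as [d [Hd HG]].
  exists (Rmin r d). split; [apply Rmin_pos; auto |]. intros q Hq.
  assert (Hqr := Rlt_le_trans _ _ _ Hq (Rmin_l r d)).
  assert (Hqd := Rlt_le_trans _ _ _ Hq (Rmin_r r d)).
  assert (Hpp : Cmod (p - p) < r) by (rewrite Cmod_sub_diag; auto).
  assert (HqD : Cmod (q - c) < rad) by (assert (T := Cmod_sub_triangle q p c); lra).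
  assert (Fpp := Hfine p p Hpp Hpp). assert (Fqq := Hfine q q Hqr Hqr).
  assert (Fqp := Hfine q p Hqr Hpp).
  unfold sqrt_lift.
  rewrite (root_chain_mesh_indep q HqD _ n (mesh_index_fine q HqD) Fqq).
  rewrite (root_chain_mesh_indep p Hp _ n (mesh_index_fine p Hp) Fpp).
  eapply Rle_lt_trans; [apply root_chain_close; auto |].
  rewrite Rdiv_diag, !radial_1; [auto |]. apply not_0_INR. pose proof (proj1 Fpp). lia.
Qed.

End SqrtLift.

Lemma cont2_box (f : R -> R -> R) (x y : R) : cont2 f (x, y) ->
  forall e, 0 < e -> exists d, 0 < d /\
    forall x' y', Rabs (x' - x) < d -> Rabs (y' - y) < d -> Rabs (f x' y' - f x y) < e.
Proof.
  intros H e He. apply (proj1 (filterlim_locally _ _)) with (eps := mkposreal e He) in H.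
  destruct H as [d Hd]. exists d. split; [apply cond_pos |]. intros x' y' Hx Hy.
  apply (Hd (x', y')). split; assumption.
Qed.

Lemma box_in_disk (q : C) (x y r : R) :
  Rabs (x - fst q) < r / 2 -> Rabs (y - snd q) < r / 2 -> Cmod ((x, y) - q) < r.
Proof.
  intros Hx Hy. eapply Rle_lt_trans; [apply Cmod_le_abs_sum |]. destruct q; simpl in *.
  unfold Rminus in *. lra.
Qed.

Lemma derive_linear_error (f : R -> R) (x : R) : ex_derive f x ->
  forall e, 0 < e -> exists d, 0 < d /\
    forall h, Rabs h < d -> Rabs (f (x + h) - f x - h * Derive f x) <= e * Rabs h.
Proof.
  intros H e He. apply Derive_correct, is_derive_Reals in H.
  destruct (H e He) as [d Hd]. exists d. split; [apply cond_pos |]. intros h Hh.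
  destruct (Req_dec h 0) as [-> | hn].
  - rewrite Rplus_0_r, Rabs_R0. replace (f x - f x - 0 * Derive f x) with 0 by ring.
    rewrite Rabs_R0. lra.
  - replace (f (x + h) - f x - h * Derive f x) with (h * ((f (x + h) - f x) / h - Derive f x))
      by (field; auto).
    rewrite Rabs_mult, Rmult_comm. apply Rmult_le_compat_r; [apply Rabs_pos |].
    left; apply Hd; auto.
Qed.

Lemma MVT_linear_error (f : R -> R) (x y L w : R) :
  (forall z, Rmin x y <= z <= Rmax x y -> ex_derive f z /\ Rabs (Derive f z - L) <= w) ->
  Rabs (f y - f x - L * (y - x)) <= w * Rabs (y - x).
Proof.
  intros H.
  destruct (MVT_gen (fun z => f z - L * z) x y (fun z => Derive f z - L)) as [z [Hz Ez]].
  - intros z Hz. apply (is_derive_minus f (fun z => L * z)).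
    + apply Derive_correct, H; lra.
    + auto_derive; [auto | ring].
  - intros z Hz. apply continuity_pt_filterlim, (ex_derive_continuous (fun z => f z - L * z)).
    apply (ex_derive_minus f (fun z => L * z)); [apply H; auto | auto_derive; auto].
  - replace (f y - f x - L * (y - x)) with ((f y - L * y) - (f x - L * x)) by ring.
    rewrite Ez, Rabs_mult. apply Rmult_le_compat_r; [apply Rabs_pos | apply H; auto].
Qed.

Lemma partials_strict_diff (f : R -> R -> R) (q1 q2 r : R) : 0 < r ->
  (forall x y, Rabs (x - q1) < r -> Rabs (y - q2) < r -> has_partials f x y) ->
  cont2 (dx f) (q1, q2) -> cont2 (dy f) (q1, q2) ->
  forall w, 0 < w -> exists rho, 0 < rho /\ forall p1 p2 s1 s2,
    Rabs (p1 - q1) < rho -> Rabs (p2 - q2) < rho -> Rabs (s1 - q1) < rho -> Rabs (s2 - q2) < rho ->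
    Rabs (f p1 p2 - f s1 s2 - (dx f q1 q2 * (p1 - s1) + dy f q1 q2 * (p2 - s2)))
      <= w * (Rabs (p1 - s1) + Rabs (p2 - s2)).
Proof.
  intros Hr Hpart Cx Cy w Hw.
  destruct (cont2_box _ _ _ Cx w Hw) as [d1 [Hd1 E1]].
  destruct (cont2_box _ _ _ Cy w Hw) as [d2 [Hd2 E2]].
  exists (Rmin r (Rmin d1 d2)). split; [repeat apply Rmin_pos; auto |].
  intros p1 p2 s1 s2 Hp1 Hp2 Hs1 Hs2.
  assert (m1 := Rmin_l r (Rmin d1 d2)). assert (m2 := Rmin_r r (Rmin d1 d2)).
  assert (m3 := Rmin_l d1 d2). assert (m4 := Rmin_r d1 d2).
  assert (between : forall z a b q, Rmin a b <= z <= Rmax a b ->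
            Rabs (a - q) < Rmin r (Rmin d1 d2) -> Rabs (b - q) < Rmin r (Rmin d1 d2) ->
            Rabs (z - q) < Rmin r (Rmin d1 d2)).
  { intros z a0 b0 q Hz Ha Hb. apply Rabs_lt_between in Ha, Hb. apply Rabs_lt_between.
    unfold Rmin, Rmax in Hz. destruct (Rle_dec a0 b0); lra. }
  assert (Hx : Rabs (f p1 p2 - f s1 p2 - dx f q1 q2 * (p1 - s1)) <= w * Rabs (p1 - s1)).
  { apply (MVT_linear_error (fun t => f t p2)). intros z Hz.
    assert (hz := between z s1 p1 q1 Hz Hs1 Hp1).
    split; [apply (Hpart z p2); lra |]. left. apply E1; lra. }
  assert (Hy : Rabs (f s1 p2 - f s1 s2 - dy f q1 q2 * (p2 - s2)) <= w * Rabs (p2 - s2)).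
  { apply (MVT_linear_error (fun t => f s1 t)). intros z Hz.
    assert (hz := between z s2 p2 q2 Hz Hs2 Hp2).
    split; [apply (Hpart s1 z); lra |]. left. apply E2; lra. }
  assert (T := Rabs_triang (f p1 p2 - f s1 p2 - dx f q1 q2 * (p1 - s1))
                           (f s1 p2 - f s1 s2 - dy f q1 q2 * (p2 - s2))).
  replace (f p1 p2 - f s1 s2 - (dx f q1 q2 * (p1 - s1) + dy f q1 q2 * (p2 - s2)))
    with (f p1 p2 - f s1 p2 - dx f q1 q2 * (p1 - s1) + (f s1 p2 - f s1 s2 - dy f q1 q2 * (p2 - s2)))
    by ring.
  lra.
Qed.

(** * The vector field [(u_x - y, u_y + x)] *)

Definition vfield (u : R -> R -> R) (p : C) : C :=
  (dx u (fst p) (snd p) - snd p, dy u (fst p) (snd p) + fst p).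

Definition jac (u : R -> R -> R) (q v : C) : C :=
  (dx (dx u) (fst q) (snd q) * fst v + (dy (dx u) (fst q) (snd q) - 1) * snd v,
   (dx (dy u) (fst q) (snd q) + 1) * fst v + dy (dy u) (fst q) (snd q) * snd v).

Lemma jac_lin (u : R -> R -> R) (q v1 v2 : C) (r1 r2 : R) :
  jac u q (RtoC r1 * v1 + RtoC r2 * v2) = (RtoC r1 * jac u q v1 + RtoC r2 * jac u q v2)%C.
Proof. unfold jac. destruct v1, v2; unfold Cplus, Cmult; simpl; f_equal; ring. Qed.

Lemma jac_scal (u : R -> R -> R) (q v : C) (r : R) : jac u q (RtoC r * v) = (RtoC r * jac u q v)%C.
Proof. unfold jac. destruct v; unfold Cmult; simpl; f_equal; ring. Qed.

Lemma jac_bound (u : R -> R -> R) (q : C) :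
  exists M, 0 <= M /\ forall v, Cmod (jac u q v) <= M * Cmod v.
Proof.
  set (r1 := (dx (dx u) (fst q) (snd q), dy (dx u) (fst q) (snd q) - 1)).
  set (r2 := (dx (dy u) (fst q) (snd q) + 1, dy (dy u) (fst q) (snd q))).
  exists (Cmod r1 + Cmod r2).
  split; [assert (H1 := Cmod_ge_0 r1); assert (H2 := Cmod_ge_0 r2); lra |].
  intros v. change (jac u q v) with ((dot r1 v, dot r2 v) : C).
  eapply Rle_trans; [apply Cmod_le_abs_sum |]. simpl.
  assert (D1 := dot_bound r1 v). assert (D2 := dot_bound r2 v). lra.
Qed.

Lemma jac_rank_one_columns (u : R -> R -> R) (q t : C) : 0 < Cmod t -> jac u q t = 0 ->
  (jac u q 1 * jac u q 1 + jac u q Ci * jac u q Ci)%C =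
  (RtoC (/ Cmod t ^ 2) * (jac u q (Ci * t) * jac u q (Ci * t)))%C.
Proof.
  intros Ht Hjt.
  assert (Col : forall v, jac u q v = (RtoC (dot (Ci * t) v / Cmod t ^ 2) * jac u q (Ci * t))%C).
  { intro v. rewrite (frame_decomp t v Ht) at 1. rewrite jac_lin, Hjt. ring. }
  rewrite (Col 1), (Col Ci).
  assert (HT : fst t ^ 2 + snd t ^ 2 <> 0) by (rewrite <- Cmod_sqr; apply pow_nonzero; lra).
  replace (/ Cmod t ^ 2)
    with ((dot (Ci * t) 1 / Cmod t ^ 2) ^ 2 + (dot (Ci * t) Ci / Cmod t ^ 2) ^ 2)
    by (rewrite !Cmod_sqr; unfold dot, Ci, Cmult, RtoC; cbn [fst snd]; field; exact HT).
  rewrite RtoC_plus, !RtoC_pow. ring.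
Qed.

Lemma Nu_normalize (u : R -> R -> R) (p : C) : Nu u p = normalize (vfield u p).
Proof. unfold Nu, normalize, vfield, Cmod. unfold Cmult; simpl. f_equal; unfold Rdiv; ring. Qed.

Lemma Sing_iff (Om : C -> Prop) (u : R -> R -> R) (p : C) : Sing Om u p <-> Om p /\ vfield u p = 0.
Proof.
  unfold Sing, vfield. split.
  - intros [HOm [E1 E2]]. split; auto. rewrite E1, E2. reflexivity.
  - intros [HOm E]. injection E. auto.
Qed.

Section VectorField.

Variables (Om : C -> Prop) (u : R -> R -> R).
Hypothesis HC2 : C2_on Om u.

Section AroundPoint.

Variables (q : C) (r : R).
Hypothesis Hr : 0 < r.
Hypothesis Hdisk : forall p, Cmod (p - q) < r -> Om p.

Lemma Om_box (x y : R) : Rabs (x - fst q) < r / 2 -> Rabs (y - snd q) < r / 2 -> Om (x, y).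
Proof. intros Hx Hy. apply Hdisk, box_in_disk; auto. Qed.

Lemma C2_at_center :
  cont2 (dx (dx u)) (fst q, snd q) /\ cont2 (dy (dx u)) (fst q, snd q) /\
  cont2 (dx (dy u)) (fst q, snd q) /\ cont2 (dy (dy u)) (fst q, snd q).
Proof.
  assert (Hq : Om (fst q, snd q))
    by (apply Hdisk; rewrite <- surjective_pairing, Cmod_sub_diag; lra).
  destruct (HC2 (fst q) (snd q) Hq) as [_ [_ [_ [_ [_ [_ H]]]]]]. exact H.
Qed.

Lemma vfield_taylor : forall w, 0 < w -> exists rho, 0 < rho /\
  forall p p', Cmod (p - q) < rho -> Cmod (p' - q) < rho ->
  Cmod (vfield u p - vfield u p' - jac u q (p - p')) <= w * Cmod (p - p').
Proof.
  intros w Hw. destruct C2_at_center as [Cxx [Cxy [Cyx Cyy]]].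
  set (q1 := fst q) in *. set (q2 := snd q) in *.
  destruct (partials_strict_diff (dx u) q1 q2 (r / 2) ltac:(lra)
              (fun x y Hx Hy => proj1 (proj2 (HC2 x y (Om_box x y Hx Hy))))
              Cxx Cxy (w / 4) ltac:(lra)) as [rho1 [Hrho1 E1]].
  destruct (partials_strict_diff (dy u) q1 q2 (r / 2) ltac:(lra)
              (fun x y Hx Hy => proj1 (proj2 (proj2 (HC2 x y (Om_box x y Hx Hy)))))
              Cyx Cyy (w / 4) ltac:(lra)) as [rho2 [Hrho2 E2]].
  exists (Rmin rho1 rho2). split; [apply Rmin_pos; auto |].
  intros [p1 p2] [s1 s2] Hp Hs.
  assert (m1 := Rmin_l rho1 rho2). assert (m2 := Rmin_r rho1 rho2).
  assert (P1 := Cmod_fst ((p1, p2) - q)). assert (P2 := Cmod_snd ((p1, p2) - q)).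
  assert (S1 := Cmod_fst ((s1, s2) - q)). assert (S2 := Cmod_snd ((s1, s2) - q)).
  assert (D1 := Cmod_fst ((p1, p2) - (s1, s2))). assert (D2 := Cmod_snd ((p1, p2) - (s1, s2))).
  simpl in P1, P2, S1, S2, D1, D2. fold q1 q2 in P1, P2, S1, S2.
  fold (p1 - q1) (p2 - q2) (s1 - q1) (s2 - q2) (p1 - s1) (p2 - s2) in *.
  specialize (E1 p1 p2 s1 s2 ltac:(lra) ltac:(lra) ltac:(lra) ltac:(lra)).
  specialize (E2 p1 p2 s1 s2 ltac:(lra) ltac:(lra) ltac:(lra) ltac:(lra)).
  eapply Rle_trans; [apply Cmod_le_abs_sum |]. unfold vfield, jac; simpl; fold q1 q2.
  match goal with |- Rabs ?X + Rabs ?Y <= _ =>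
    replace X
      with (dx u p1 p2 - dx u s1 s2 - (dx (dx u) q1 q2 * (p1 - s1) + dy (dx u) q1 q2 * (p2 - s2)))
      by ring;
    replace Y
      with (dy u p1 p2 - dy u s1 s2 - (dx (dy u) q1 q2 * (p1 - s1) + dy (dy u) q1 q2 * (p2 - s2)))
      by ring end.
  nra.
Qed.

Lemma vfield_cont : Ccont_at (vfield u) q.
Proof.
  intros e He. destruct (jac_bound u q) as [M [HM HJ]].
  destruct (vfield_taylor 1 ltac:(lra)) as [rho [Hrho Ht]].
  exists (Rmin rho (e / (M + 1))). split; [apply Rmin_pos; [auto | apply Rdiv_lt_0_compat; lra] |].
  intros z Hz. assert (Hz1 := Rlt_le_trans _ _ _ Hz (Rmin_l _ _)).
  assert (Hz2 := Rlt_le_trans _ _ _ Hz (Rmin_r _ _)).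
  specialize (Ht z q Hz1 ltac:(rewrite Cmod_sub_diag; lra)).
  assert (T := Cmod_triangle (vfield u z - vfield u q - jac u q (z - q)) (jac u q (z - q))).
  replace (vfield u z - vfield u q - jac u q (z - q) + jac u q (z - q))%C
    with (vfield u z - vfield u q)%C in T by ring.
  assert (J := HJ (z - q)%C).
  apply Rmult_lt_compat_r with (r := M + 1) in Hz2; [| lra].
  replace (e / (M + 1) * (M + 1)) with e in Hz2 by (field; lra). nra.
Qed.

Lemma mixed_partials_sym : dx (dy u) (fst q) (snd q) = dy (dx u) (fst q) (snd q).
Proof.
  destruct C2_at_center as [_ [Cxy [Cyx _]]].
  apply Schwarz.
  - exists (mkposreal (r / 2) ltac:(lra)). intros x y Hx Hy.
    destruct (HC2 x y (Om_box x y Hx Hy)) as [[P1 P2] [[P3 P4] [[P5 P6] _]]]. repeat split; auto.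
  - intro e. destruct (cont2_box _ _ _ Cyx e (cond_pos e)) as [d [Hd E]].
    exists (mkposreal d Hd). intros x y Hx Hy. apply E; auto.
  - intro e. destruct (cont2_box _ _ _ Cxy e (cond_pos e)) as [d [Hd E]].
    exists (mkposreal d Hd). intros x y Hx Hy. apply E; auto.
Qed.

End AroundPoint.

End VectorField.

Section Curve.

Variables (g1 g2 : R -> R) (a b : R).
Hypothesis Hcurve : regular_C1_curve g1 g2 a b.

Definition gam (t : R) : C := (g1 t, g2 t).

Definition tangent (t : R) : C := (Derive g1 t, Derive g2 t).

Definition normal (t : R) : C := (Ci * tangent t)%C.

Lemma tangent_pos (t : R) : a < t < b -> 0 < Cmod (tangent t).
Proof.
  intros Ht. destruct Hcurve as [_ [Hreg _]]. destruct (Hreg t Ht) as [_ [_ [_ [_ Hne]]]].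
  apply Cmod_gt_0. exact Hne.
Qed.

Lemma Cmod_normal (t : R) : Cmod (normal t) = Cmod (tangent t).
Proof. unfold normal. rewrite Cmod_mult, Cmod_Ci. ring. Qed.

Lemma gam_linear_error (t : R) : a < t < b -> forall e, 0 < e -> exists d, 0 < d /\
  forall h, Rabs h < d -> Cmod (gam (t + h) - gam t - RtoC h * tangent t) <= e * Rabs h.
Proof.
  intros Ht e He. destruct Hcurve as [_ [Hreg _]]. destruct (Hreg t Ht) as [D1 [D2 _]].
  destruct (derive_linear_error g1 t D1 (e / 2) ltac:(lra)) as [d1 [Hd1 E1]].
  destruct (derive_linear_error g2 t D2 (e / 2) ltac:(lra)) as [d2 [Hd2 E2]].
  exists (Rmin d1 d2). split; [apply Rmin_pos; auto |]. intros h Hh.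
  specialize (E1 h (Rlt_le_trans _ _ _ Hh (Rmin_l _ _))).
  specialize (E2 h (Rlt_le_trans _ _ _ Hh (Rmin_r _ _))).
  eapply Rle_trans; [apply Cmod_le_abs_sum |]. unfold gam, tangent; simpl.
  match goal with |- Rabs ?X + Rabs ?Y <= _ =>
    replace X with (g1 (t + h) - g1 t - h * Derive g1 t) by ring;
    replace Y with (g2 (t + h) - g2 t - h * Derive g2 t) by ring end.
  lra.
Qed.

Lemma gam_displacement (t : R) : a < t < b -> forall rho, 0 < rho -> exists h0, 0 < h0 /\
  a < t - h0 /\ t + h0 < b /\ forall h, Rabs h <= h0 -> Cmod (gam (t + h) - gam t) < rho.
Proof.
  intros Ht rho Hrho. destruct (gam_linear_error t Ht 1 ltac:(lra)) as [d [Hd E]].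
  set (K := Cmod (tangent t) + 1).
  assert (HK : 0 < K) by (unfold K; assert (H0 := Cmod_ge_0 (tangent t)); lra).
  set (h0 := Rmin (Rmin (d / 2) (rho / (2 * K))) (Rmin ((t - a) / 2) ((b - t) / 2))).
  assert (m1 := Rmin_l (Rmin (d / 2) (rho / (2 * K))) (Rmin ((t - a) / 2) ((b - t) / 2))).
  assert (m2 := Rmin_r (Rmin (d / 2) (rho / (2 * K))) (Rmin ((t - a) / 2) ((b - t) / 2))).
  assert (m3 := Rmin_l (d / 2) (rho / (2 * K))). assert (m4 := Rmin_r (d / 2) (rho / (2 * K))).
  assert (m5 := Rmin_l ((t - a) / 2) ((b - t) / 2)).
  assert (m6 := Rmin_r ((t - a) / 2) ((b - t) / 2)).
  assert (Hh0 : 0 < h0) by (unfold h0; repeat apply Rmin_pos; try apply Rdiv_lt_0_compat; lra).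
  fold h0 in m1, m2. exists h0. split; [lra | split; [lra | split; [lra |]]].
  intros h Hh. specialize (E h ltac:(lra)).
  assert (T := Cmod_triangle (gam (t + h) - gam t - RtoC h * tangent t) (RtoC h * tangent t)).
  replace (gam (t + h) - gam t - RtoC h * tangent t + RtoC h * tangent t)%C
    with (gam (t + h) - gam t)%C in T by ring.
  rewrite Cmod_scal in T.
  assert (HhK : Rabs h * K <= rho / (2 * K) * K) by (apply Rmult_le_compat_r; lra).
  replace (rho / (2 * K) * K) with (rho / 2) in HhK by (field; lra). unfold K in *. lra.
Qed.

Lemma curve_foot (tq : R) : a < tq < b -> forall rho, 0 < rho -> exists d, 0 < d /\
  forall p, Cmod (p - gam tq) < d -> exists t, a < t < b /\
    Cmod (gam t - gam tq) < rho /\ dot (tangent tq) (p - gam t) = 0.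
Proof.
  intros Htq rho Hrho. assert (Hpos := tangent_pos tq Htq). set (L := Cmod (tangent tq)) in *.
  destruct (gam_linear_error tq Htq (L / 2) ltac:(lra)) as [d1 [Hd1 E]].
  destruct (gam_displacement tq Htq rho Hrho) as [h1 [Hh1 [Ha [Hb Disp]]]].
  set (h0 := Rmin (d1 / 2) h1).
  assert (Hh0 : 0 < h0) by (apply Rmin_pos; lra).
  assert (m1 := Rmin_l (d1 / 2) h1). assert (m2 := Rmin_r (d1 / 2) h1). fold h0 in m1, m2.
  exists (L * h0 / 4). split; [apply Rdiv_lt_0_compat; nra |]. intros p Hp.
  set (f := fun t => dot (tangent tq) (gam t - p)).
  assert (Step : forall h, Rabs h <= h0 ->
                 Rabs (f (tq + h) - f tq - h * L ^ 2) <= L ^ 2 / 2 * Rabs h).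
  { intros h Hh. unfold f.
    replace (dot (tangent tq) (gam (tq + h) - p) - dot (tangent tq) (gam tq - p) - h * L ^ 2)
      with (dot (tangent tq) (gam (tq + h) - gam tq - RtoC h * tangent tq))
      by (unfold L; rewrite <- dot_self; unfold dot, Cmult; simpl; ring).
    eapply Rle_trans; [apply dot_bound |]. fold L.
    specialize (E h ltac:(lra)). nra. }
  assert (F0 : Rabs (f tq) <= L * Cmod (p - gam tq)).
  { unfold f. rewrite Cmod_sub_sym. apply dot_bound. }
  assert (Fp := Step h0 ltac:(rewrite Rabs_right; lra)). rewrite (Rabs_right h0) in Fp by lra.
  assert (Fm := Step (- h0) ltac:(rewrite Rabs_Ropp, Rabs_right; lra)).
  rewrite Rabs_Ropp, (Rabs_right h0) in Fm by lra.
  apply Rabs_le_between' in Fp, Fm. apply Rabs_le_between in F0.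
  assert (L * Cmod (p - gam tq) < L * (L * h0 / 4)) by (apply Rmult_lt_compat_l; auto).
  destruct (Ranalysis5.IVT_interv f (tq - h0) (tq + h0)) as [t [Ht Hft]].
  - intros t Ht. destruct Hcurve as [_ [Hreg _]]. destruct (Hreg t ltac:(lra)) as [D1 [D2 _]].
    apply continuity_pt_filterlim, (ex_derive_continuous f).
    unfold f, dot, gam, tangent; simpl. auto_derive. repeat split; auto.
  - lra.
  - unfold Rminus at 1. nra.
  - nra.
  - exists t. split; [lra |]. split.
    + replace t with (tq + (t - tq)) by ring. apply Disp, Rabs_le. lra.
    + replace (p - gam t)%C with (- (gam t - p))%C by ring.
      unfold f, dot in *. simpl in *. lra.
Qed.

(** * The vector field near a curve of zeros *)

Section ZeroCurve.

Variables (Om : C -> Prop) (u : R -> R -> R) (p0 : C) (eps : R).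
Hypothesis HC2 : C2_on Om u.
Hypothesis Hdisk : forall p, Cmod (p - p0) < eps -> Om p.
Hypothesis Hzero : forall t, a < t < b -> vfield u (gam t) = 0.

Lemma disk_inner (q : C) : Cmod (q - p0) < eps ->
  forall p, Cmod (p - q) < eps - Cmod (q - p0) -> Om p.
Proof. intros Hq p Hp. apply Hdisk. assert (T := Cmod_sub_triangle p q p0). lra. Qed.

Lemma vfield_taylor_disk (q : C) : Cmod (q - p0) < eps -> forall w, 0 < w -> exists rho, 0 < rho /\
  forall p p', Cmod (p - q) < rho -> Cmod (p' - q) < rho ->
  Cmod (vfield u p - vfield u p' - jac u q (p - p')) <= w * Cmod (p - p').
Proof.
  intros Hq. apply (vfield_taylor Om u HC2 q (eps - Cmod (q - p0))); [lra | apply disk_inner; auto].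
Qed.

Lemma jac_tangent (tq : R) : a < tq < b -> Cmod (gam tq - p0) < eps ->
  jac u (gam tq) (tangent tq) = 0.
Proof.
  intros Htq Hq. set (q := gam tq) in *. set (tau := tangent tq).
  destruct (jac_bound u q) as [M [HM HJ]].
  apply (Cmod_le_all_eps _ (Cmod tau + 1 + M)). intros w Hw.
  destruct (vfield_taylor_disk q Hq w ltac:(lra)) as [rho [Hrho Ht]].
  destruct (gam_linear_error tq Htq w ltac:(lra)) as [d [Hd Hlin]].
  destruct (gam_displacement tq Htq rho Hrho) as [h1 [Hh1 [_ [Hb Hdisp]]]].
  set (h := Rmin (d / 2) h1).
  assert (Hh : 0 < h) by (apply Rmin_pos; lra).
  assert (m1 := Rmin_l (d / 2) h1). assert (m2 := Rmin_r (d / 2) h1). fold h in m1, m2.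
  assert (Habs : Rabs h = h) by (apply Rabs_right; lra).
  set (Delta := (gam (tq + h) - q)%C). set (err := (Delta - RtoC h * tau)%C).
  assert (Herr : Cmod err <= w * h) by (rewrite <- Habs; apply Hlin; lra).
  assert (HDelta : Cmod Delta <= h * Cmod tau + w * h).
  { replace Delta with (RtoC h * tau + err)%C by (unfold err; ring).
    eapply Rle_trans; [apply Cmod_triangle |]. rewrite Cmod_scal, Habs. lra. }
  assert (HJD : Cmod (jac u q Delta) <= w * Cmod Delta).
  { assert (E := Ht (gam (tq + h)) q (Hdisp h ltac:(lra)) ltac:(rewrite Cmod_sub_diag; lra)).
    assert (Zq : vfield u q = 0) by (apply Hzero; auto).
    rewrite Hzero, Zq in E by lra.
    replace (0 - 0 - jac u q (gam (tq + h) - q))%C with (- jac u q Delta)%C in E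
      by (unfold Delta; ring).
    rewrite Cmod_opp in E. exact E. }
  assert (Split : (RtoC h * jac u q tau)%C = (jac u q Delta - jac u q err)%C).
  { rewrite <- jac_scal.
    replace Delta with (RtoC 1 * (RtoC h * tau) + RtoC 1 * err)%C by (unfold err; ring).
    rewrite jac_lin, jac_scal. ring. }
  assert (Hsum : h * Cmod (jac u q tau) <= w * Cmod Delta + M * Cmod err).
  { rewrite <- Habs, <- Cmod_scal, Split.
    assert (T := Cmod_triangle (jac u q Delta) (- jac u q err)). rewrite Cmod_opp in T.
    assert (J := HJ err). unfold Cminus. lra. }
  assert (w * Cmod Delta <= w * (h * Cmod tau + w * h)) by (apply Rmult_le_compat_l; lra).
  assert (M * Cmod err <= M * (w * h)) by (apply Rmult_le_compat_l; lra).
  assert (w * (w * h) <= w * (1 * h))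
    by (apply Rmult_le_compat_l; [| apply Rmult_le_compat_r]; lra).
  apply (Rmult_le_reg_l h); auto. lra.
Qed.

Definition transverse_deriv (t : R) : C := jac u (gam t) (normal t).

(* The Jacobian of [vfield u] is the Hessian of [u] plus a rotation by a right angle;
   it cannot kill both [tangent] and [normal], which span the plane. *)
Lemma transverse_deriv_pos (tq : R) : a < tq < b -> Cmod (gam tq - p0) < eps ->
  0 < Cmod (transverse_deriv tq).
Proof.
  intros Htq Hq. assert (Ht := jac_tangent tq Htq Hq).
  assert (Hsym := mixed_partials_sym Om u HC2 _ (eps - Cmod (gam tq - p0)) ltac:(lra)
                  (disk_inner _ Hq)).
  assert (Hpos := tangent_pos tq Htq). rewrite <- Cmod_gt_0 in Hpos |- *.
  intro Hn. apply Hpos. unfold transverse_deriv, normal, jac, tangent in *.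
  rewrite Hsym in Ht, Hn. set (q := gam tq) in *.
  set (A := dx (dx u) (fst q) (snd q)) in *. set (D := dy (dy u) (fst q) (snd q)) in *.
  set (m := dy (dx u) (fst q) (snd q)) in *.
  set (t1 := Derive g1 tq) in *. set (t2 := Derive g2 tq) in *.
  unfold Ci, Cmult in Hn; simpl in Hn. injection Ht; injection Hn; intros e4 e3 e2 e1.
  assert (F1 : (m - 1) * (t1 * t1 + t2 * t2) =
               t2 * (A * t1 + (m - 1) * t2)
               + t1 * (A * (0 * t1 - 1 * t2) + (m - 1) * (0 * t2 + 1 * t1)))
    by ring.
  assert (F2 : (m + 1) * (t1 * t1 + t2 * t2) =
               t1 * ((m + 1) * t1 + D * t2)
               - t2 * ((m + 1) * (0 * t1 - 1 * t2) + D * (0 * t2 + 1 * t1)))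
    by ring.
  rewrite e1, e3 in F1. rewrite e2, e4 in F2.
  assert (T0 : t1 * t1 + t2 * t2 = 0) by nra.
  apply injective_projections; simpl; nra.
Qed.

Lemma vfield_dir_near (tq : R) : a < tq < b -> Cmod (gam tq - p0) < eps ->
  forall e, 0 < e -> exists rho, 0 < rho /\ forall p q' lam,
    Cmod (p - gam tq) < rho -> Cmod (q' - gam tq) < rho -> vfield u q' = 0 ->
    lam <> 0 -> p = (q' + RtoC lam * normal tq)%C ->
    0 < Cmod (vfield u p) /\
    Cmod (normalize (vfield u p) - normalize (RtoC lam * transverse_deriv tq)) < e.
Proof.
  intros Htq Hq e He.
  assert (HW := transverse_deriv_pos tq Htq Hq). set (W := Cmod (transverse_deriv tq)) in *.
  assert (HL := tangent_pos tq Htq). rewrite <- Cmod_normal in HL.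
  set (L := Cmod (normal tq)) in *.
  set (k := Rmin (1/4) (e/4)). assert (Hk : 0 < k) by (apply Rmin_pos; lra).
  destruct (vfield_taylor_disk _ Hq (k * W / L) ltac:(apply Rdiv_lt_0_compat; nra))
    as [rho [Hrho Ht]].
  exists rho. split; auto. intros p q' lam Hp Hq' Zq' Hlam Ep.
  specialize (Ht p q' Hp Hq').
  replace (p - q')%C with (RtoC lam * normal tq)%C in Ht by (rewrite Ep; ring).
  rewrite Zq', jac_scal, Cmod_scal in Ht. fold (transverse_deriv tq) L in Ht.
  replace (vfield u p - 0 - RtoC lam * transverse_deriv tq)%C
    with (vfield u p - RtoC lam * transverse_deriv tq)%C in Ht by ring.
  assert (Hl : 0 < Rabs lam) by (apply Rabs_pos_lt; auto).
  destruct (normalize_perturb (vfield u p) (RtoC lam * transverse_deriv tq) k) as [H1 H2].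
  - rewrite Cmod_scal. fold W. nra.
  - split; [lra | apply Rmin_l].
  - rewrite Cmod_scal. fold W.
    replace (k * (Rabs lam * W)) with (k * W / L * (Rabs lam * L)) by (field; lra). exact Ht.
  - split; auto. assert (k <= e / 4) by apply Rmin_r. lra.
Qed.

Lemma vfield_dir_along_normal (tq : R) : a < tq < b -> Cmod (gam tq - p0) < eps ->
  forall e, 0 < e -> exists d, 0 < d /\ forall r, r <> 0 -> Rabs r < d ->
    0 < Cmod (vfield u (gam tq + RtoC r * normal tq)) /\
    Cmod (normalize (vfield u (gam tq + RtoC r * normal tq))
          - normalize (RtoC r * transverse_deriv tq)) < e.
Proof.
  intros Htq Hq e He. destruct (vfield_dir_near tq Htq Hq e He) as [rho [Hrho H]].
  assert (HL := tangent_pos tq Htq). rewrite <- Cmod_normal in HL.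
  exists (rho / Cmod (normal tq)). split; [apply Rdiv_lt_0_compat; auto |].
  intros r Hr Hrd. apply (H _ (gam tq) r); auto.
  - replace (gam tq + RtoC r * normal tq - gam tq)%C with (RtoC r * normal tq)%C
      by ring.
    rewrite Cmod_scal. apply (Rmult_lt_compat_r (Cmod (normal tq))) in Hrd; auto.
    replace (rho / Cmod (normal tq) * Cmod (normal tq)) with rho in Hrd by (field; lra).
    exact Hrd.
  - rewrite Cmod_sub_diag. auto.
Qed.

Lemma sq_dir_near_curve (tq : R) : a < tq < b -> Cmod (gam tq - p0) < eps ->
  forall e, 0 < e -> exists d, 0 < d /\ forall p, Cmod (p - gam tq) < d -> 0 < Cmod (vfield u p) ->
    Cmod (normalize (vfield u p * vfield u p)
          - normalize (transverse_deriv tq * transverse_deriv tq)) < e.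
Proof.
  intros Htq Hq e He. destruct (vfield_dir_near tq Htq Hq (e / 2) ltac:(lra)) as [rho [Hrho Hdir]].
  destruct (curve_foot tq Htq rho Hrho) as [d [Hd Hfoot]].
  exists (Rmin d rho). split; [apply Rmin_pos; auto |]. intros p Hp HVp.
  destruct (Hfoot p (Rlt_le_trans _ _ _ Hp (Rmin_l _ _))) as [t [Ht [Hnear Hdot]]].
  set (lam := dot (Ci * tangent tq) (p - gam t) / Cmod (tangent tq) ^ 2).
  assert (Ep : p = (gam t + RtoC lam * normal tq)%C).
  { transitivity ((p - gam t) + gam t)%C; [ring |].
    rewrite (orth_decomp _ _ (tangent_pos tq Htq) Hdot). fold lam. unfold normal. ring. }
  assert (Hlam : lam <> 0).
  { intros E. rewrite E, Cmult_0_l, Cplus_0_r in Ep. rewrite Ep, Hzero in HVp by auto.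
    rewrite Cmod_0 in HVp. lra. }
  destruct (Hdir p (gam t) lam (Rlt_le_trans _ _ _ Hp (Rmin_r _ _)) Hnear (Hzero t Ht) Hlam Ep)
    as [_ Hclose].
  assert (HW := transverse_deriv_pos tq Htq Hq).
  assert (Hlw : 0 < Cmod (RtoC lam * transverse_deriv tq)).
  { rewrite Cmod_scal. apply Rmult_lt_0_compat; auto. apply Rabs_pos_lt; auto. }
  set (lw := (RtoC lam * transverse_deriv tq)%C) in *.
  replace (normalize (transverse_deriv tq * transverse_deriv tq))
    with (normalize lw * normalize lw)%C.
  - rewrite normalize_mult.
    eapply Rle_lt_trans; [apply unit_sqr_dist; apply normalize_unit; auto | lra].
  - rewrite <- normalize_mult.
    rewrite <- (normalize_scal_pos (lam * lam) (transverse_deriv tq * transverse_deriv tq))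
      by (apply Rsqr_pos_lt; auto).
    f_equal. unfold lw. rewrite RtoC_mult. ring.
Qed.

(* On the curve the Jacobian has
   rank one, [J = w n^T / |n|^2] with [w = transverse_deriv t], so the sum of the squares
   of its columns is [w^2 / |n|^2]. *)
Definition sq_dir (p : C) : C :=
  if Req_EM_T (Cmod (vfield u p)) 0
  then normalize (jac u p 1 * jac u p 1 + jac u p Ci * jac u p Ci)
  else normalize (vfield u p * vfield u p).

Lemma sq_dir_off (p : C) : 0 < Cmod (vfield u p) -> sq_dir p = normalize (vfield u p * vfield u p).
Proof. intro H. unfold sq_dir. destruct (Req_EM_T (Cmod (vfield u p)) 0); [lra | reflexivity]. Qed.

Lemma sq_dir_on_curve (tq : R) : a < tq < b -> Cmod (gam tq - p0) < eps ->
  sq_dir (gam tq) = normalize (transverse_deriv tq * transverse_deriv tq).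
Proof.
  intros Htq Hq. assert (Ht := tangent_pos tq Htq).
  unfold sq_dir. rewrite Hzero, Cmod_0 by auto. destruct (Req_EM_T 0 0) as [_ | h]; [| lra].
  rewrite (jac_rank_one_columns u _ _ Ht (jac_tangent tq Htq Hq)).
  apply normalize_scal_pos, Rinv_0_lt_compat, pow_lt. auto.
Qed.

Lemma vfield_cont_disk (p : C) : Cmod (p - p0) < eps -> Ccont_at (vfield u) p.
Proof.
  intros Hp. apply (vfield_cont Om u HC2 p (eps - Cmod (p - p0))); [lra | apply disk_inner; auto].
Qed.

Lemma sq_dir_cont_off (p : C) : Cmod (p - p0) < eps -> 0 < Cmod (vfield u p) -> Ccont_at sq_dir p.
Proof.
  intros Hp HV. assert (HF := vfield_cont_disk p Hp).
  destruct (Ccont_at_nonzero_near _ _ HF HV) as [d [Hd Hnz]].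
  apply (Ccont_at_local _ (fun z => normalize (vfield u z * vfield u z)) p d Hd).
  - intros z Hz. apply sq_dir_off, Hnz; auto.
  - apply (Ccont_at_normalize (fun z => vfield u z * vfield u z)%C).
    + apply (Ccont_at_sqr (vfield u)); auto.
    + rewrite Cmod_mult. nra.
Qed.

Lemma vfield_nonzero_near_curve (t : R) : a < t < b -> Cmod (gam t - p0) < eps ->
  forall d, 0 < d -> exists z, Cmod (z - gam t) < d /\ 0 < Cmod (vfield u z).
Proof.
  intros Ht Hq d Hd. destruct (vfield_dir_along_normal t Ht Hq 1 ltac:(lra)) as [d1 [Hd1 Hdir]].
  assert (HL := tangent_pos t Ht). rewrite <- Cmod_normal in HL.
  set (r := Rmin d1 (d / Cmod (normal t)) / 2).
  assert (m1 := Rmin_l d1 (d / Cmod (normal t))). assert (m2 := Rmin_r d1 (d / Cmod (normal t))).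
  assert (Hr : 0 < r).
  { unfold r. apply Rdiv_lt_0_compat; [apply Rmin_pos; [| apply Rdiv_lt_0_compat] |]; lra. }
  exists (gam t + RtoC r * normal t)%C. split.
  - replace (gam t + RtoC r * normal t - gam t)%C with (RtoC r * normal t)%C by ring.
    rewrite Cmod_scal, Rabs_right by lra.
    apply Rlt_le_trans with (d / Cmod (normal t) * Cmod (normal t)).
    + apply Rmult_lt_compat_r; unfold r in *; lra.
    + right; field; lra.
  - apply Hdir; [lra | rewrite Rabs_right; unfold r in *; lra].
Qed.

Hypothesis Hzero_set : forall p, Cmod (p - p0) < eps -> vfield u p = 0 ->
  exists t, a < t < b /\ p = gam t.

Lemma sq_dir_unit (p : C) : Cmod (p - p0) < eps -> Cmod (sq_dir p) = 1.
Proof.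
  intros Hp. destruct (Req_dec (Cmod (vfield u p)) 0) as [h | h].
  - apply Cmod_eq_0 in h. destruct (Hzero_set p Hp h) as [t [Ht ->]].
    rewrite sq_dir_on_curve by auto. apply normalize_unit. rewrite Cmod_mult.
    assert (H0 := transverse_deriv_pos t Ht Hp). nra.
  - assert (HV : 0 < Cmod (vfield u p)) by (assert (H0 := Cmod_ge_0 (vfield u p)); lra).
    rewrite sq_dir_off by auto. apply normalize_unit. rewrite Cmod_mult. nra.
Qed.

Lemma sq_dir_cont_on_curve (tq : R) : a < tq < b -> Cmod (gam tq - p0) < eps ->
  Ccont_at sq_dir (gam tq).
Proof.
  intros Htq Hq e He. rewrite sq_dir_on_curve by auto.
  destruct (sq_dir_near_curve tq Htq Hq (e / 2) ltac:(lra)) as [d [Hd Hnear]].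
  exists (Rmin d (eps - Cmod (gam tq - p0))). split; [apply Rmin_pos; lra |]. intros z Hz.
  assert (Hzd := Rlt_le_trans _ _ _ Hz (Rmin_l _ _)).
  assert (HzD : Cmod (z - p0) < eps).
  { assert (T := Cmod_sub_triangle z (gam tq) p0).
    assert (Hm := Rmin_r d (eps - Cmod (gam tq - p0))). lra. }
  destruct (Req_dec (Cmod (vfield u z)) 0) as [h | h].
  - apply Cmod_eq_0 in h. destruct (Hzero_set z HzD h) as [tz [Htz ->]].
    rewrite sq_dir_on_curve by auto.
    destruct (sq_dir_near_curve tz Htz HzD (e / 2) ltac:(lra)) as [dz [Hdz Hnz]].
    destruct (vfield_nonzero_near_curve tz Htz HzD (Rmin dz (d - Cmod (gam tz - gam tq))))
      as [z' [Hz' HVz']]; [apply Rmin_pos; lra |].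
    assert (m1 := Rmin_l dz (d - Cmod (gam tz - gam tq))).
    assert (m2 := Rmin_r dz (d - Cmod (gam tz - gam tq))).
    assert (A1 := Hnz z' ltac:(lra) HVz').
    assert (A2 : Cmod (normalize (vfield u z' * vfield u z') -
                       normalize (transverse_deriv tq * transverse_deriv tq)) < e / 2).
    { apply Hnear; auto. assert (T := Cmod_sub_triangle z' (gam tz) (gam tq)). lra. }
    assert (T := Cmod_sub_triangle (normalize (transverse_deriv tz * transverse_deriv tz))
                   (normalize (vfield u z' * vfield u z'))
                   (normalize (transverse_deriv tq * transverse_deriv tq))).
    rewrite Cmod_sub_sym in A1. lra.
  - rewrite sq_dir_off by (assert (H0 := Cmod_ge_0 (vfield u z)); lra).
    assert (Hnear' := Hnear z Hzd ltac:(assert (H0 := Cmod_ge_0 (vfield u z)); lra)). lra.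
Qed.

Lemma sq_dir_cont (p : C) : Cmod (p - p0) < eps -> Ccont_at sq_dir p.
Proof.
  intros Hp. destruct (Req_dec (Cmod (vfield u p)) 0) as [h | h].
  - apply Cmod_eq_0 in h. destruct (Hzero_set p Hp h) as [t [Ht ->]].
    apply sq_dir_cont_on_curve; auto.
  - apply sq_dir_cont_off; auto. assert (H0 := Cmod_ge_0 (vfield u p)); lra.
Qed.

Lemma normalize_vfield_discontinuous (t0 : R) (F : C -> C) (d : R) :
  a < t0 < b -> Cmod (gam t0 - p0) < eps -> 0 < d -> Ccont_at F (gam t0) ->
  ~ (forall p, Cmod (p - gam t0) < d -> 0 < Cmod (vfield u p) -> normalize (vfield u p) = F p).
Proof.
  intros Ht0 Hq Hd HF Heq.
  destruct (vfield_dir_along_normal t0 Ht0 Hq (1 / 2) ltac:(lra)) as [d1 [Hd1 Hdir]].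
  destruct (HF (1 / 2) ltac:(lra)) as [d2 [Hd2 HF2]].
  assert (HL := tangent_pos t0 Ht0). rewrite <- Cmod_normal in HL.
  set (L := Cmod (normal t0)) in *. set (q := gam t0) in *.
  set (r := Rmin d1 (Rmin d d2 / L) / 2).
  assert (m1 := Rmin_l d1 (Rmin d d2 / L)). assert (m2 := Rmin_r d1 (Rmin d d2 / L)).
  assert (m3 := Rmin_l d d2). assert (m4 := Rmin_r d d2).
  assert (Hdd2 := Rmin_pos d d2 Hd Hd2).
  assert (Hr : 0 < r).
  { unfold r. apply Rdiv_lt_0_compat; [apply Rmin_pos; [| apply Rdiv_lt_0_compat] |]; lra. }
  assert (HrL : r * L < Rmin d d2).
  { apply Rle_lt_trans with (Rmin d d2 / L / 2 * L); [apply Rmult_le_compat_r; unfold r; lra |].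
    replace (Rmin d d2 / L / 2 * L) with (Rmin d d2 / 2) by (field; lra). lra. }
  assert (side : forall s, Rabs s = r -> Cmod (F q - normalize (RtoC s * transverse_deriv t0)) < 1).
  { intros s Hs. assert (Hs0 : s <> 0) by (intro E; rewrite E, Rabs_R0 in Hs; lra).
    destruct (Hdir s Hs0 ltac:(unfold r in Hs; lra)) as [HV Hclose].
    assert (Hdist : Cmod (q + RtoC s * normal t0 - q) < Rmin d d2).
    { replace (q + RtoC s * normal t0 - q)%C with (RtoC s * normal t0)%C by ring.
      rewrite Cmod_scal, Hs. exact HrL. }
    rewrite Heq in Hclose by (auto; lra).
    assert (HF' := HF2 _ (Rlt_le_trans _ _ _ Hdist m4)).
    assert (T := Cmod_sub_triangle (F q) (F (q + RtoC s * normal t0)%C)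
                   (normalize (RtoC s * transverse_deriv t0))).
    rewrite Cmod_sub_sym in HF'. lra. }
  assert (Hp := side r ltac:(apply Rabs_right; lra)).
  assert (Hm := side (- r) ltac:(rewrite Rabs_Ropp; apply Rabs_right; lra)).
  rewrite normalize_scal_pos in Hp by lra. rewrite normalize_scal_neg in Hm by lra.
  replace (F q - - normalize (transverse_deriv t0))%C with (F q + normalize (transverse_deriv t0))%C
    in Hm by ring.
  apply (unit_not_near_both_signs (normalize (transverse_deriv t0)) (F q)); auto.
  apply normalize_unit, transverse_deriv_pos; auto.
Qed.

End ZeroCurve.

End Curve.

Section Proposition.

Variables (Om : C -> Prop) (u : R -> R -> R) (g1 g2 : R -> R) (a b : R) (p0 : C) (eps : R)
  (Bp Bm : C -> Prop).
Hypothesis HC2 : C2_on Om u.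
Hypothesis Hcurve : regular_C1_curve g1 g2 a b.
Hypothesis Hsing : forall p, trace g1 g2 a b p -> Sing Om u p.
Hypothesis Heps : 0 < eps.
Hypothesis Hdisk : forall p, disk p0 eps p -> Om p.
Hypothesis Hsplit : forall p, (disk p0 eps p /\ ~ trace g1 g2 a b p) <-> (Bp p \/ Bm p).
Hypothesis HregP : forall p, Bp p -> ~ Sing Om u p.
Hypothesis HregM : forall p, Bm p -> ~ Sing Om u p.

Lemma disk_in_Om (p : C) : Cmod (p - p0) < eps -> Om p.
Proof. intros Hp. apply Hdisk, disk_Cmod; lra. Qed.

Lemma vfield_zero_on_curve (t : R) : a < t < b -> vfield u (gam g1 g2 t) = 0.
Proof.
  intros Ht. assert (HS : Sing Om u (gam g1 g2 t)) by (apply Hsing; exists t; auto).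
  apply Sing_iff in HS. apply HS.
Qed.

Lemma sides_regular (p : C) : Bp p \/ Bm p -> Cmod (p - p0) < eps /\ 0 < Cmod (vfield u p).
Proof.
  intros HB. destruct (proj2 (Hsplit p) HB) as [Hp _]. apply disk_Cmod in Hp; [| lra].
  split; auto. apply Cmod_gt_0. intros E.
  destruct HB as [HB | HB]; [apply (HregP p HB) | apply (HregM p HB)];
    apply Sing_iff; auto using disk_in_Om.
Qed.

Lemma zero_set_on_curve (p : C) : Cmod (p - p0) < eps -> vfield u p = 0 ->
  exists t, a < t < b /\ p = gam g1 g2 t.
Proof.
  intros Hp E. destruct (classic (trace g1 g2 a b p)) as [Ht | Ht]; [exact Ht |].
  destruct (sides_regular p) as [_ HV].
  - apply Hsplit. split; auto. apply disk_Cmod; lra.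
  - rewrite E, Cmod_0 in HV. lra.
Qed.

Let lift := sqrt_lift (sq_dir u) p0.

Lemma lift_spec (p : C) : Cmod (p - p0) < eps ->
  Cmod (lift p) = 1 /\ (lift p * lift p)%C = sq_dir u p /\ Ccont_at lift p.
Proof.
  intros Hp.
  assert (GU := sq_dir_unit g1 g2 a b Hcurve Om u p0 eps HC2 disk_in_Om vfield_zero_on_curve
                     zero_set_on_curve).
  assert (GC := sq_dir_cont g1 g2 a b Hcurve Om u p0 eps HC2 disk_in_Om vfield_zero_on_curve
                     zero_set_on_curve).
  destruct (sqrt_lift_spec _ _ _ GU GC p Hp) as [U E].
  split; [| split]; auto. apply (sqrt_lift_cont _ _ eps GU GC p Hp).
Qed.

Lemma Nu_sign_on_side (B : C -> Prop) : connected2 B -> (forall p, B p -> Bp p \/ Bm p) ->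
  exists s, (s = 1 \/ s = -1) /\ forall p, B p -> Nu u p = (RtoC s * lift p)%C.
Proof.
  intros Hconn Hsub. setoid_rewrite Nu_normalize.
  apply connected_sign; auto. intros p Bp'.
  destruct (sides_regular p (Hsub p Bp')) as [Hp HV]. destruct (lift_spec p Hp) as [U [E C']].
  repeat split; auto.
  - apply Ccont_at_normalize; auto. apply vfield_cont_disk with Om p0 eps; auto using disk_in_Om.
  - rewrite E, <- normalize_mult, sq_dir_off; auto.
Qed.

Lemma sides_opposite_signs (t0 sp sm : R) : a < t0 < b -> p0 = gam g1 g2 t0 ->
  (sp = 1 \/ sp = -1) -> (sm = 1 \/ sm = -1) ->
  (forall p, Bp p -> Nu u p = (RtoC sp * lift p)%C) ->
  (forall p, Bm p -> Nu u p = (RtoC sm * lift p)%C) -> sm = - sp.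
Proof.
  intros Ht0 Ep0 Hsp Hsm Ep Em.
  assert (Hne : sp <> sm).
  { intros <-. assert (Hq : Cmod (gam g1 g2 t0 - p0) < eps) by (rewrite <- Ep0, Cmod_sub_diag; lra).
    apply (normalize_vfield_discontinuous g1 g2 a b Hcurve Om u p0 eps HC2 disk_in_Om
             vfield_zero_on_curve t0 (fun p => RtoC sp * lift p)%C eps Ht0 Hq Heps).
    - rewrite <- Ep0. apply Ccont_at_scal, lift_spec. rewrite Cmod_sub_diag; lra.
    - intros p Hp HV. rewrite <- Ep0 in Hp. rewrite <- Nu_normalize.
      assert (HB : Bp p \/ Bm p).
      { apply Hsplit. split; [apply disk_Cmod; lra |]. intros [t [Ht ->]].
        change (g1 t, g2 t) with (gam g1 g2 t) in HV.
        rewrite vfield_zero_on_curve, Cmod_0 in HV by auto. lra. }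
      destruct HB; auto. }
  destruct Hsp as [-> | ->], Hsm as [-> | ->]; lra.
Qed.

End Proposition.

Theorem proposition3p5
  (Om : R * R -> Prop) (u : R -> R -> R)
  (g1 g2 : R -> R) (a b : R) (p0 : R * R) (eps : R)
  (Bp Bm : R * R -> Prop) :
  domain2 Om ->
  C2_on Om u ->
  regular_C1_curve g1 g2 a b ->
  (forall p, trace g1 g2 a b p -> Sing Om u p) ->
  trace g1 g2 a b p0 ->
  0 < eps ->
  (forall p, disk p0 eps p -> Om p) ->
  (forall p, (disk p0 eps p /\ ~ trace g1 g2 a b p) <-> (Bp p \/ Bm p)) ->
  (forall p, ~ (Bp p /\ Bm p)) ->
  domain2 Bp -> domain2 Bm ->
  (forall p, Bp p -> ~ Sing Om u p) ->
  (forall p, Bm p -> ~ Sing Om u p) ->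
  exists Lp Lm : R * R,
    filterlim (Nu u) (within Bp (locally p0)) (locally Lp) /\
    filterlim (Nu u) (within Bm (locally p0)) (locally Lm) /\
    Lp = (- fst Lm, - snd Lm).
Proof.
  intros _ HC2 Hcurve Hsing [t0 [Ht0 Ep0]] Heps Hdisk Hsplit _ [_ [HconnP _]] [_ [HconnM _]]
    HregP HregM.
  pose proof (Nu_sign_on_side Om u g1 g2 a b p0 eps Bp Bm HC2 Hcurve Hsing Heps Hdisk Hsplit
                HregP HregM) as Hside.
  destruct (Hside Bp HconnP (fun p H => or_introl H)) as [sp [Hsp Ep]].
  destruct (Hside Bm HconnM (fun p H => or_intror H)) as [sm [Hsm Em]].
  assert (Hopp := sides_opposite_signs Om u g1 g2 a b p0 eps Bp Bm HC2 Hcurve Hsing Heps Hdisk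
                    Hsplit HregP HregM t0 sp sm Ht0 Ep0 Hsp Hsm Ep Em).
  assert (Hcont : Ccont_at (sqrt_lift (sq_dir u) p0) p0).
  { apply (lift_spec Om u g1 g2 a b p0 eps Bp Bm HC2 Hcurve Hsing Heps Hdisk Hsplit HregP HregM).
    rewrite Cmod_sub_diag. lra. }
  assert (Habs : forall s, s = 1 \/ s = -1 -> Rabs s = 1)
    by (intros s [-> | ->]; [apply Rabs_R1 | apply Rabs_m1]).
  exists (RtoC sp * sqrt_lift (sq_dir u) p0 p0)%C, (RtoC sm * sqrt_lift (sq_dir u) p0 p0)%C.
  split; [| split]; try (apply filterlim_within_scaled; auto).
  rewrite Hopp. unfold RtoC, Cmult. simpl. f_equal; ring.
Qed.
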